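(* Let $H$ be a real Hilbert space, $f:H\to\mathbb{R}\cup\{+\infty\}$ a lower semicontinuous function, $\bar x\in\operatorname{dom}f$ and $p\in\partial_pf(\bar x)$, and suppose $f$ is twice epi-differentiable (in the sense of Mosco) at $\bar x$ relative to $p$. Then for every $h\in\operatorname{dom}\partial f''_-(\bar x,p,\cdot)$, $$\sup\{\langle w,h\rangle: w\in\partial^2_M f(\bar x,p)(h)\}\le f''_-(\bar x,p,h),$$ equivalently $\partial^2_Mf(\bar x,p)(h)\subset\{w\in H:\langle w,h\rangle\le f''_-(\bar x,p,h)\}$.
   Context: Weak convergence is denoted $\stackrel{w}{\to}$. Proximal subdifferential: $\zeta\in\partial_p f(x)$ iff there exist $\sigma,\delta>0$ with $f(y)\ge f(x)+\langle \zeta,y-x\rangle-\frac{\sigma}{2}\|y-x\|^2$ whenever $\|y-x\|<\delta$. Limiting subdifferential of a lower semicontinuous $g$: $\zeta\in\partial g(x)$ iff there exist $x_n\to x$ with $g(x_n)\to g(x)$ and $\zeta_n\stackrel{w}{\to}\zeta$ with $\zeta_n\in\partial_p g(x_n)$; $\operatorname{dom}\partial g=\{x:\partial g(x)\ne\emptyset\}$. $\Delta_2 f(\bar x,p,t,u):=\frac{f(\bar x+tu)-f(\bar x)-t\langle p,u\rangle}{\frac12 t^2}$, $f''_-(\bar x,p,h):=\liminf_{h'\to h,\,t\downarrow0}\Delta_2 f(\bar x,p,t,h')$, and $\partial f''_-(\bar x,p,\cdot)(h)$ is the limiting subdifferential of $h\mapsto f''_-(\bar x,p,h)$. Mixed contingent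 cone: $(h,z)\in T_M(\operatorname{gph}\partial_p f,(\bar x,p))$ iff there exist $t_n\to0^+$, $h_n\to h$ in norm, $z_n\stackrel{w}{\to}z$ with $p+t_nz_n\in\partial_pf(\bar x+t_nh_n)$ for all $n$. $N_M(\operatorname{gph}\partial_pf,(\bar x,p)):=\{(a,b)\in H\times H:\langle a,h\rangle+\langle b,z\rangle\le0\ \forall (h,z)\in T_M(\operatorname{gph}\partial_pf,(\bar x,p))\}$. Second-order mixed proximal subdifferential: $\partial^2_Mf(\bar x,p)(h):=\{z:(z,-h)\in N_M(\operatorname{gph}\partial_pf,(\bar x,p))\}$. Twice epi-differentiability (Mosco sense) at $\bar x$ relative to $p$: there is a proper function $\phi$ such that for every $t_n\to0^+$, the epigraphs of $\Delta_2f(\bar x,p,t_n,\cdot)$ Mosco converge to $\operatorname{epi}\phi$, where $C_n\to C$ in the Mosco sense means $C$ equals both the set of norm limits of sequences $x_n\in C_n$ and the set of weak limits of subsequences $x_{n_k}\in C_{n_k}$. *)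

From Stdlib Require Import Reals Lra ClassicalEpsilon.
Open Scope R_scope.

Record Hilbert := {
  hcar :> Type;
  hadd : hcar -> hcar -> hcar;
  hscal : R -> hcar -> hcar;
  hzero : hcar;
  inner : hcar -> hcar -> R;
  hadd_assoc : forall x y z, hadd x (hadd y z) = hadd (hadd x y) z;
  hadd_comm : forall x y, hadd x y = hadd y x;
  hadd_0 : forall x, hadd x hzero = x;
  hadd_opp : forall x, hadd x (hscal (-1) x) = hzero;
  hscal_assoc : forall a b x, hscal a (hscal b x) = hscal (a * b) x;
  hscal_1 : forall x, hscal 1 x = x;
  hscal_distr_l : forall a x y, hscal a (hadd x y) = hadd (hscal a x) (hscal a y);
  hscal_distr_r : forall a b x, hscal (a + b) x = hadd (hscal a x) (hscal b x);
  inner_sym : forall x y, inner x y = inner y x;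
  inner_add_l : forall x y z, inner (hadd x y) z = inner x z + inner y z;
  inner_scal_l : forall a x y, inner (hscal a x) y = a * inner x y;
  inner_pos : forall x, 0 <= inner x x;
  inner_def : forall x, inner x x = 0 -> x = hzero;
  hcomplete : forall u : nat -> hcar,
    (forall eps, eps > 0 -> exists N, forall m n, (N <= m)%nat -> (N <= n)%nat ->
        sqrt (inner (hadd (u m) (hscal (-1) (u n))) (hadd (u m) (hscal (-1) (u n)))) < eps) ->
    exists l, forall eps, eps > 0 -> exists N, forall n, (N <= n)%nat ->
        sqrt (inner (hadd (u n) (hscal (-1) l)) (hadd (u n) (hscal (-1) l))) < eps
}.

Arguments hadd {h}.
Arguments hscal {h}.
Arguments hzero {h}.
Arguments inner {h}.

Definition hsub {E : Hilbert} (x y : E) : E := hadd x (hscal (-1) y).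
Definition hnorm {E : Hilbert} (x : E) : R := sqrt (inner x x).

Definition norm_conv {E : Hilbert} (u : nat -> E) (l : E) : Prop :=
  forall eps, eps > 0 -> exists N, forall n, (N <= n)%nat -> hnorm (hsub (u n) l) < eps.
Definition weak_conv {E : Hilbert} (u : nat -> E) (l : E) : Prop :=
  forall v : E, Un_cv (fun n => inner (u n) v) (inner l v).

Inductive ER := Fin (r : R) | PInf | MInf.

Definition ERle (x y : ER) : Prop :=
  match x, y with
  | MInf, _ => True
  | _, PInf => True
  | Fin a, Fin b => a <= b
  | _, _ => False
  end.
Definition ERlt (x y : ER) : Prop := ERle x y /\ x <> y.

Definition is_glb (P : ER -> Prop) (l : ER) : Prop :=
  (forall y, P y -> ERle l y) /\ (forall m, (forall y, P y -> ERle m y) -> ERle m l).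
Definition is_lub (P : ER -> Prop) (l : ER) : Prop :=
  (forall y, P y -> ERle y l) /\ (forall m, (forall y, P y -> ERle y m) -> ERle l m).

(* infimum / supremum of a set of extended reals (they always exist) *)
Definition ERinf (P : ER -> Prop) : ER := epsilon (inhabits PInf) (is_glb P).
Definition ERsup (P : ER -> Prop) : ER := epsilon (inhabits PInf) (is_lub P).

Definition lsc {E : Hilbert} (g : E -> ER) : Prop :=
  forall (x : E) (r : R), ERlt (Fin r) (g x) ->
    exists delta, delta > 0 /\
      forall y, hnorm (hsub y x) < delta -> ERlt (Fin r) (g y).

Definition prox_sub {E : Hilbert} (g : E -> ER) (x zeta : E) : Prop :=
  exists gx, g x = Fin gx /\
  exists sigma delta, sigma > 0 /\ delta > 0 /\
    forall y, hnorm (hsub y x) < delta ->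
      ERle (Fin (gx + inner zeta (hsub y x) - sigma / 2 * (hnorm (hsub y x)) ^ 2)) (g y).

Definition lim_sub {E : Hilbert} (g : E -> ER) (x zeta : E) : Prop :=
  exists gx, g x = Fin gx /\
  exists (xn zn : nat -> E) (gxn : nat -> R),
    norm_conv xn x /\
    (forall n, g (xn n) = Fin (gxn n)) /\ Un_cv gxn gx /\
    weak_conv zn zeta /\
    (forall n, prox_sub g (xn n) (zn n)).

Definition dom_lim_sub {E : Hilbert} (g : E -> ER) (x : E) : Prop :=
  exists zeta, lim_sub g x zeta.

Definition Delta2 {E : Hilbert} (f : E -> ER) (xb p : E) (t : R) (u : E) : ER :=
  match f (hadd xb (hscal t u)), f xb with
  | Fin a, Fin b => Fin ((a - b - t * inner p u) / (t ^ 2 / 2))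
  | _, _ => PInf
  end.

(* f''_-(xb,p,h) = liminf_{h' -> h, t downarrow 0} Delta2 f(xb,p,t,h')
   = sup_{delta>0} inf { Delta2 f(xb,p,t,h') : 0<t<delta, |h'-h|<delta } *)
Definition f2lower {E : Hilbert} (f : E -> ER) (xb p : E) (h : E) : ER :=
  ERsup (fun v => exists delta, delta > 0 /\
     v = ERinf (fun w => exists (t : R) (h' : E),
            0 < t < delta /\ hnorm (hsub h' h) < delta /\ w = Delta2 f xb p t h')).

Definition epi {E : Hilbert} (g : E -> ER) : E * R -> Prop :=
  fun z => ERle (g (fst z)) (Fin (snd z)).

Definition proper {E : Hilbert} (g : E -> ER) : Prop :=
  (forall u, g u <> MInf) /\ exists u r, g u = Fin r.

Definition Mosco_conv {E : Hilbert} (C : nat -> E * R -> Prop) (C0 : E * R -> Prop) : Prop :=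
  forall z : E * R,
    (C0 z <-> exists zs : nat -> E * R,
        (forall n, C n (zs n)) /\
        norm_conv (fun n => fst (zs n)) (fst z) /\ Un_cv (fun n => snd (zs n)) (snd z)) /\
    (C0 z <-> exists (phi : nat -> nat) (zs : nat -> E * R),
        (forall k, (phi k < phi (S k))%nat) /\
        (forall k, C (phi k) (zs k)) /\
        weak_conv (fun k => fst (zs k)) (fst z) /\ Un_cv (fun k => snd (zs k)) (snd z)).

Definition twice_epi_diff_Mosco {E : Hilbert} (f : E -> ER) (xb p : E) : Prop :=
  exists phi : E -> ER, proper phi /\
    forall tn : nat -> R, (forall n, 0 < tn n) -> Un_cv tn 0 ->
      Mosco_conv (fun n => epi (Delta2 f xb p (tn n))) (epi phi).

(* mixed contingent cone to gph (prox_sub f) at (xb,p) *)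
Definition T_M {E : Hilbert} (f : E -> ER) (xb p : E) (h z : E) : Prop :=
  exists (tn : nat -> R) (hn zn : nat -> E),
    (forall n, 0 < tn n) /\ Un_cv tn 0 /\
    norm_conv hn h /\ weak_conv zn z /\
    forall n, prox_sub f (hadd xb (hscal (tn n) (hn n))) (hadd p (hscal (tn n) (zn n))).

Definition N_M {E : Hilbert} (f : E -> ER) (xb p : E) (a b : E) : Prop :=
  forall h z, T_M f xb p h z -> inner a h + inner b z <= 0.

Definition d2_M {E : Hilbert} (f : E -> ER) (xb p h w : E) : Prop :=
  N_M f xb p w (hscal (-1) h).

(* Write f'' for the lower epi-derivative f''_-(xb, p, .). Mosco convergence of the epigraphs of
   the difference quotients along t_n = 1/(n + 1) identifies their epi-limit with f'', and f'' is
   positively homogeneous of degree 2, so a proximal subgradient zeta of f'' at u satisfies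
   <zeta, u> <= 2 f''(u).

   The heart of the proof is that (u, zeta/2) then lies in the mixed contingent cone T_M.  Minimise
   Delta2 f(xb, p, t_n, .) - <zeta, .> + sigma |. - u|^2 over a ball around u with a smooth
   (Borwein-Preiss type) variational principle, started at a point of a recovery sequence for
   (u, f''(u)).  The Mosco liminf inequality, together with weak sequential compactness of bounded
   sets, gives a quadratic minorant of the quotients near u, uniform in n, which keeps the
   approximate minimisers v_n close to u; their proximal subgradients rescale to points
   (xb + t_n v_n, p + t_n z_n) of gph d_p f with z_n close to zeta/2.

   Hence every w in d2_M f(xb, p)(h) satisfies <w, u> <= <h, zeta>/2 <= f''(u) + <zeta, h - u>/2
   whenever zeta is a proximal subgradient of f'' at u.  Along a sequence (u_n, zeta_n) defining a
   limiting subgradient at h, the zeta_n converge weakly and are therefore bounded, and letting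
   n -> oo gives <w, h> <= f''(h). *)

From Pilot Require Import Defs.
From Stdlib Require Import Reals Lra Lia ClassicalEpsilon ZArith.
Open Scope R_scope.

Arguments hadd_comm {h}. Arguments inner_sym {h}. Arguments inner_pos {h}.

Lemma Rabs_le_inv a b : Rabs a <= b -> - b <= a <= b.
Proof. unfold Rabs; destruct (Rcase_abs a); intros; split; lra. Qed.

(** * Hilbert space calculus *)

Section HilbertCalculus.

Context {E : Hilbert}.
Implicit Types (x y z a b : E).

Lemma inner_add_r x y z : inner x (hadd y z) = inner x y + inner x z.
Proof. rewrite inner_sym, inner_add_l, (inner_sym y), (inner_sym z); ring. Qed.

Lemma inner_scal_r r x y : inner x (hscal r y) = r * inner x y.
Proof. rewrite inner_sym, inner_scal_l, inner_sym; ring. Qed.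

Lemma inner_zero_l z : inner hzero z = 0.
Proof.
  assert (H : inner (hadd (@hzero E) hzero) z = inner hzero z) by now rewrite hadd_0.
  rewrite inner_add_l in H; lra.
Qed.

Lemma inner_zero_r z : inner z hzero = 0.
Proof. rewrite inner_sym; apply inner_zero_l. Qed.

Lemma inner_sub_l x y z : inner (hsub x y) z = inner x z - inner y z.
Proof. unfold hsub; rewrite inner_add_l, inner_scal_l; ring. Qed.

Lemma inner_sub_r x y z : inner z (hsub x y) = inner z x - inner z y.
Proof. rewrite inner_sym, inner_sub_l, !(inner_sym z); ring. Qed.

Lemma hsub_eq0 a b : hsub a b = hzero -> a = b.
Proof.
  unfold hsub; intro H.
  assert (a = hadd (hadd a (hscal (-1) b)) b) as ->.
  { rewrite <- hadd_assoc, (hadd_comm _ b), hadd_opp, hadd_0; reflexivity. }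
  rewrite H, hadd_comm, hadd_0; reflexivity.
Qed.

Lemma inner_ext a b : (forall z, inner a z = inner b z) -> a = b.
Proof. intro H; apply hsub_eq0, inner_def; rewrite inner_sub_l, H; ring. Qed.

End HilbertCalculus.

Ltac hring :=
  apply inner_ext; intro;
  repeat rewrite ?inner_add_l, ?inner_scal_l, ?inner_sub_l, ?inner_zero_l;
  (ring || field).

Section HilbertNorm.

Context {E : Hilbert}.
Implicit Types (x y z : E).

Lemma hnorm_sq x : hnorm x * hnorm x = inner x x.
Proof. apply sqrt_sqrt, inner_pos. Qed.

Lemma hnorm_pow2 x : hnorm x ^ 2 = inner x x.
Proof. rewrite <- hnorm_sq; ring. Qed.

Lemma hnorm_ge0 x : 0 <= hnorm x.
Proof. apply sqrt_pos. Qed.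

Lemma hnorm_le_sq x r : 0 <= r -> inner x x <= r * r -> hnorm x <= r.
Proof. intros Hr H; rewrite <- (sqrt_square r) by lra; apply sqrt_le_1_alt; lra. Qed.

Lemma hnorm_lt_sq x r : 0 <= r -> inner x x < r * r -> hnorm x < r.
Proof.
  intros Hr H; rewrite <- (sqrt_square r) by lra.
  apply sqrt_lt_1_alt; split; [apply inner_pos | lra].
Qed.

Lemma hnorm_eq0 x : hnorm x = 0 -> x = hzero.
Proof. intro H; apply inner_def; rewrite <- hnorm_sq, H; ring. Qed.

Lemma inner_sq_le x y : inner x y * inner x y <= inner x x * inner y y.
Proof.
  destruct (Req_dec (inner y y) 0) as [H0 | H0].
  { apply inner_def in H0; subst y; rewrite !inner_zero_r; lra. }
  assert (Hy : 0 < inner y y) by (pose proof (inner_pos y); lra).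
  (* expand 0 <= |x + t y|^2 at the minimising t *)
  pose (t := - inner x y / inner y y).
  assert (Hp := inner_pos (hadd x (hscal t y))).
  rewrite inner_add_l, !inner_add_r, !inner_scal_l, !inner_scal_r, (inner_sym y x) in Hp.
  replace (inner x x + t * inner x y + (t * inner x y + t * (t * inner y y)))
    with ((inner x x * inner y y - inner x y * inner x y) / inner y y) in Hp
    by (unfold t; field; lra).
  apply (Rmult_le_compat_r (inner y y)) in Hp; [| lra].
  unfold Rdiv in Hp; rewrite Rmult_0_l, Rmult_assoc, Rinv_l, Rmult_1_r in Hp by lra; lra.
Qed.

Lemma Cauchy_Schwarz x y : Rabs (inner x y) <= hnorm x * hnorm y.
Proof.
  rewrite <- (Rabs_pos_eq (hnorm x * hnorm y)) by (apply Rmult_le_pos; apply hnorm_ge0).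
  apply Rsqr_le_abs_0; unfold Rsqr.
  replace (hnorm x * hnorm y * (hnorm x * hnorm y))
    with (hnorm x * hnorm x * (hnorm y * hnorm y)) by ring.
  rewrite !hnorm_sq; apply inner_sq_le.
Qed.

Lemma inner_le_hnorm x y : inner x y <= hnorm x * hnorm y.
Proof. pose proof (Cauchy_Schwarz x y) as H; apply Rabs_le_inv in H; lra. Qed.

Lemma inner_ge_hnorm x y : - (hnorm x * hnorm y) <= inner x y.
Proof. pose proof (Cauchy_Schwarz x y) as H; apply Rabs_le_inv in H; lra. Qed.

Lemma two_inner_le x y : 2 * inner x y <= inner x x + inner y y.
Proof.
  pose proof (inner_pos (hsub x y)) as H.
  rewrite inner_sub_l, !inner_sub_r, (inner_sym y x) in H; lra.
Qed.

Lemma hnorm_scal r x : hnorm (hscal r x) = Rabs r * hnorm x.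
Proof.
  unfold hnorm; rewrite inner_scal_l, inner_scal_r, <- Rmult_assoc.
  rewrite sqrt_mult_alt by apply Rle_0_sqr; rewrite <- (sqrt_Rsqr_abs r); reflexivity.
Qed.

Lemma hnorm_add_le x y : hnorm (hadd x y) <= hnorm x + hnorm y.
Proof.
  pose proof (hnorm_ge0 x); pose proof (hnorm_ge0 y).
  apply hnorm_le_sq; [lra |].
  rewrite inner_add_l, !inner_add_r, (inner_sym y x), <- (hnorm_sq x), <- (hnorm_sq y).
  pose proof (inner_le_hnorm x y); nra.
Qed.

Lemma hnorm_sub_triangle x y z : hnorm (hsub x z) <= hnorm (hsub x y) + hnorm (hsub y z).
Proof. replace (hsub x z) with (hadd (hsub x y) (hsub y z)) by hring; apply hnorm_add_le. Qed.

Lemma hnorm_sub_sym x y : hnorm (hsub x y) = hnorm (hsub y x).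
Proof.
  replace (hsub x y) with (hscal (-1) (hsub y x)) by hring.
  rewrite hnorm_scal, Rabs_left by lra; ring.
Qed.

Lemma hnorm_sub_diag x : hnorm (hsub x x) = 0.
Proof.
  replace (hsub x x) with (@hzero E) by hring.
  unfold hnorm; rewrite inner_zero_l; apply sqrt_0.
Qed.

Lemma hsub_zero_r x : hsub x hzero = x.
Proof. hring. Qed.

End HilbertNorm.

(** * Real sequences and extended reals *)

Lemma Un_cv_le_eventually (u : nat -> R) l c :
  Un_cv u l -> (exists N, forall n, (N <= n)%nat -> u n <= c) -> l <= c.
Proof.
  intros Hu [N HN]; apply Rnot_lt_le; intro Hlt.
  destruct (Hu ((l - c) / 2)) as [M HM]; [lra |].
  specialize (HM (max N M) (Nat.le_max_r _ _)); specialize (HN (max N M) (Nat.le_max_l _ _)).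
  unfold Rdist in HM; apply Rabs_def2 in HM; lra.
Qed.

Lemma Un_cv_ge_eventually (u : nat -> R) l c :
  Un_cv u l -> (exists N, forall n, (N <= n)%nat -> c <= u n) -> c <= l.
Proof.
  intros Hu [N HN]; apply Rnot_lt_le; intro Hlt.
  destruct (Hu ((c - l) / 2)) as [M HM]; [lra |].
  specialize (HM (max N M) (Nat.le_max_r _ _)); specialize (HN (max N M) (Nat.le_max_l _ _)).
  unfold Rdist in HM; apply Rabs_def2 in HM; lra.
Qed.

Lemma Un_cv_eventually_between (u : nat -> R) l a b :
  Un_cv u l -> a < l < b -> exists N, forall n, (N <= n)%nat -> a < u n < b.
Proof.
  intros Hu Hab; destruct (Hu (Rmin (l - a) (b - l))) as [N HN]; [apply Rmin_pos; lra |].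
  exists N; intros n Hn; specialize (HN n Hn); unfold Rdist in HN; apply Rabs_def2 in HN.
  pose proof (Rmin_l (l - a) (b - l)); pose proof (Rmin_r (l - a) (b - l)); lra.
Qed.

Lemma Un_cv_bounded (u : nat -> R) l : Un_cv u l -> exists M, forall n, Rabs (u n) <= M.
Proof. intro H; destruct (maj_by_pos u (exist _ l H)) as [M [_ HM]]; eauto. Qed.

Lemma Un_cv_const (c : R) : Un_cv (fun _ => c) c.
Proof. intros eps He; exists O; intros; unfold Rdist; rewrite Rminus_diag, Rabs_R0; lra. Qed.

Lemma Un_cv_pow (a : R) : 0 <= a < 1 -> Un_cv (fun k => a ^ k) 0.
Proof.
  intros Ha eps He.
  destruct (pow_lt_1_zero a ltac:(rewrite Rabs_pos_eq; lra) eps He) as [N HN].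
  exists N; intros n Hn; unfold Rdist; rewrite Rminus_0_r; apply HN; lia.
Qed.

Lemma inv_succ_pos n : 0 < / (INR n + 1).
Proof. apply Rinv_0_lt_compat; pose proof (pos_INR n); lra. Qed.

Lemma inv_succ_eventually_lt eta :
  eta > 0 -> exists N, forall n, (N <= n)%nat -> / (INR n + 1) < eta.
Proof.
  intro He; destruct (archimed (/ eta)) as [H1 _].
  assert (Hz : (0 <= up (/ eta))%Z).
  { apply le_IZR; pose proof (Rinv_0_lt_compat eta He); simpl; lra. }
  exists (Z.to_nat (up (/ eta))); intros n Hn.
  apply le_INR in Hn; rewrite INR_IZR_INZ, Z2Nat.id in Hn by auto.
  rewrite <- (Rinv_inv eta); pose proof (pos_INR n); pose proof (Rinv_0_lt_compat eta He).
  apply Rinv_lt_contravar; [apply Rmult_lt_0_compat |]; lra.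
Qed.

Lemma Un_cv_inv_succ : Un_cv (fun n => / (INR n + 1)) 0.
Proof.
  intros eps He; destruct (inv_succ_eventually_lt eps He) as [N HN]; exists N; intros n Hn.
  unfold Rdist; rewrite Rminus_0_r, Rabs_pos_eq by (apply Rlt_le, inv_succ_pos).
  apply HN; lia.
Qed.

Lemma Un_cv_0_squeeze (a b : nat -> R) :
  (forall n, Rabs (a n) <= b n) -> Un_cv b 0 -> Un_cv a 0.
Proof.
  intros Hab Hb eps He; destruct (Hb eps He) as [N HN]; exists N; intros n Hn.
  specialize (HN n Hn); specialize (Hab n); unfold Rdist in *; rewrite Rminus_0_r in *.
  pose proof (Rle_abs (b n)); lra.
Qed.

Lemma le_of_le_plus_small A B C s0 :
  s0 > 0 -> (forall s, 0 < s < s0 -> A <= B + s * C) -> A <= B.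
Proof.
  intros Hs0 H; apply Rnot_lt_le; intro Hlt; pose proof (Rabs_pos C).
  set (s := Rmin (s0 / 2) ((A - B) / (2 * (Rabs C + 1)))).
  assert (Hs : 0 < s) by (apply Rmin_pos; [| apply Rdiv_lt_0_compat]; lra).
  assert (H1 : s <= s0 / 2) by apply Rmin_l.
  assert (H2 : s * (2 * (Rabs C + 1)) <= A - B).
  { pose proof (Rmin_r (s0 / 2) ((A - B) / (2 * (Rabs C + 1)))) as Hr; fold s in Hr.
    apply (Rmult_le_compat_r (2 * (Rabs C + 1))) in Hr; [| lra].
    unfold Rdiv in Hr; rewrite Rmult_assoc, Rinv_l, Rmult_1_r in Hr by lra; lra. }
  specialize (H s ltac:(lra)).
  assert (s * C <= s * Rabs C) by (apply Rmult_le_compat_l; [lra | apply Rle_abs]); nra.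
Qed.

Lemma real_glb (S : R -> Prop) :
  (exists r, S r) -> (exists m, forall r, S r -> m <= r) ->
  exists g, (forall r, S r -> g <= r) /\ (forall a, (forall r, S r -> a <= r) -> a <= g).
Proof.
  intros [r0 Hr0] [m Hm].
  destruct (completeness (fun x => S (- x))) as [l [Hl1 Hl2]].
  - exists (- m); intros x Hx; specialize (Hm _ Hx); lra.
  - exists (- r0); now rewrite Ropp_involutive.
  - exists (- l); split.
    + intros r Hr; assert (H : S (- - r)) by now rewrite Ropp_involutive.
      specialize (Hl1 _ H); lra.
    + intros a Ha; assert (H : l <= - a); [apply Hl2; intros x Hx; specialize (Ha _ Hx); lra | lra].
Qed.

Lemma ERle_trans x y z : ERle x y -> ERle y z -> ERle x z.
Proof. destruct x as [x| |], y as [y| |], z as [z| |]; simpl; auto; try lra; tauto. Qed.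

Definition ERopp (x : ER) : ER := match x with Fin r => Fin (- r) | PInf => MInf | MInf => PInf end.

Lemma ERopp_involutive x : ERopp (ERopp x) = x.
Proof. destruct x; simpl; rewrite ?Ropp_involutive; reflexivity. Qed.

Lemma ERle_opp x y : ERle (ERopp x) (ERopp y) <-> ERle y x.
Proof. destruct x, y; simpl; split; auto; lra. Qed.

Lemma ER_glb_exists (P : ER -> Prop) : exists l, is_glb P l.
Proof.
  destruct (classic (P MInf)) as [HM | HM].
  { exists MInf; split; [intros; exact I | intros m Hm; apply Hm, HM]. }
  destruct (classic (exists r, P (Fin r))) as [HF | HF].
  2: { exists PInf; split; intros [y| |] Hy; simpl; auto; apply HF; eauto. }
  destruct (classic (exists m, forall r, P (Fin r) -> m <= r)) as [HB | HB].
  - destruct (real_glb (fun r => P (Fin r)) HF HB) as [g [Hg1 Hg2]].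
    exists (Fin g); split; [intros [y| |] Hy; simpl; auto |].
    destruct HF as [r Hr]; intros [a| |] Ha; simpl; auto; [| exact (Ha _ Hr)].
    apply Hg2; intros r' Hr'; exact (Ha _ Hr').
  - exists MInf; split; [intros; exact I |].
    destruct HF as [r Hr]; intros [a| |] Ha; simpl; auto; [| exact (Ha _ Hr)].
    apply HB; exists a; intros r' Hr'; exact (Ha _ Hr').
Qed.

Lemma ER_lub_exists (P : ER -> Prop) : exists l, Defs.is_lub P l.
Proof.
  destruct (ER_glb_exists (fun y => P (ERopp y))) as [l [H1 H2]].
  exists (ERopp l); split.
  - intros y Hy; apply ERle_opp; rewrite ERopp_involutive; apply H1.
    now rewrite ERopp_involutive.
  - intros m Hm; rewrite <- (ERopp_involutive m); apply ERle_opp, H2.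
    intros y Hy; rewrite <- (ERopp_involutive y); apply ERle_opp, Hm, Hy.
Qed.

Lemma ERinf_le (P : ER -> Prop) y : P y -> ERle (ERinf P) y.
Proof. apply (proj1 (epsilon_spec _ _ (ER_glb_exists P))). Qed.

Lemma le_ERinf (P : ER -> Prop) m : (forall y, P y -> ERle m y) -> ERle m (ERinf P).
Proof. apply (proj2 (epsilon_spec _ _ (ER_glb_exists P))). Qed.

Lemma le_ERsup (P : ER -> Prop) y : P y -> ERle y (ERsup P).
Proof. apply (proj1 (epsilon_spec _ _ (ER_lub_exists P))). Qed.

Lemma ERsup_le (P : ER -> Prop) m : (forall y, P y -> ERle y m) -> ERle (ERsup P) m.
Proof. apply (proj2 (epsilon_spec _ _ (ER_lub_exists P))). Qed.

Lemma ERle_Fin_eps X a : (forall eps, eps > 0 -> ERle X (Fin (a + eps))) -> ERle X (Fin a).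
Proof.
  intro H; destruct X as [x| |]; simpl; auto.
  - apply Rnot_lt_le; intro Hlt; specialize (H ((x - a) / 2) ltac:(lra)); simpl in H; lra.
  - apply (H 1); lra.
Qed.

Lemma ERlt_of_not_le X c : ~ ERle X (Fin c) -> ERlt (Fin c) X.
Proof.
  destruct X as [x| |]; simpl; intro H; [| | tauto].
  - split; simpl; [lra | intro He; injection He; lra].
  - split; simpl; [auto | discriminate].
Qed.

Lemma ERinf_approx (P : ER -> Prop) c eps :
  ERle (ERinf P) (Fin c) -> eps > 0 -> exists y, P y /\ ERle y (Fin (c + eps)).
Proof.
  intros H He; apply NNPP; intro Hn.
  assert (H2 : ERle (Fin (c + eps)) (ERinf P)).
  { apply le_ERinf; intros y Hy; apply ERlt_of_not_le; eauto. }
  pose proof (ERle_trans _ _ _ H2 H); simpl in *; lra.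
Qed.

Definition sincr (th : nat -> nat) := forall k, (th k < th (S k))%nat.

Lemma sincr_ge th : sincr th -> forall k, (k <= th k)%nat.
Proof. intros H k; induction k; [lia |]; specialize (H k); lia. Qed.

Lemma sincr_lt th : sincr th -> forall i j, (i < j)%nat -> (th i < th j)%nat.
Proof. intros H i j Hij; induction Hij; [apply H |]; specialize (H m); lia. Qed.

Lemma sincr_le th : sincr th -> forall i j, (i <= j)%nat -> (th i <= th j)%nat.
Proof.
  intros H i j Hij; destruct (Nat.eq_dec i j); [subst; lia |].
  pose proof (sincr_lt th H i j); lia.
Qed.

Lemma sincr_comp a b : sincr a -> sincr b -> sincr (fun k => a (b k)).
Proof. intros Ha Hb k; apply sincr_lt; auto. Qed.

Lemma Un_cv_subseq (u : nat -> R) l th : Un_cv u l -> sincr th -> Un_cv (fun k => u (th k)) l.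
Proof.
  intros H Hth eps He; destruct (H eps He) as [N HN]; exists N; intros n Hn.
  apply HN; pose proof (sincr_ge th Hth n); lia.
Qed.

Lemma sincr_choice {A : Type} (P : nat -> nat -> A -> Prop) :
  (forall k N, exists n a, (N <= n)%nat /\ P k n a) ->
  exists (th : nat -> nat) (sel : nat -> A), sincr th /\ forall k, P k (th k) (sel k).
Proof.
  intro H.
  assert (Hc : forall k N, {na : nat * A | (N <= fst na)%nat /\ P k (fst na) (snd na)}).
  { intros k N; apply constructive_indefinite_description.
    destruct (H k N) as [n [a Hna]]; exists (n, a); exact Hna. }
  pose (pick := fix pick k := match k with
                              | O => proj1_sig (Hc O O)
                              | S k => proj1_sig (Hc (S k) (S (fst (pick k))))
                              end).
  exists (fun k => fst (pick k)), (fun k => snd (pick k)); split.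
  - intro k; simpl; destruct (proj2_sig (Hc (S k) (S (fst (pick k))))); lia.
  - intros [| k]; apply (proj2_sig (Hc _ _)).
Qed.

Lemma bounded_seq_cv_subseq (a : nat -> R) M :
  (forall n, Rabs (a n) <= M) -> exists th l, sincr th /\ Un_cv (fun k => a (th k)) l.
Proof.
  intro HM.
  destruct (Bolzano_Weierstrass a (fun c => - M <= c <= M) (compact_P3 _ _)) as [l Hl].
  { intro n; apply Rabs_le_inv, HM. }
  destruct (sincr_choice (fun k n (_ : unit) => Rabs (a n - l) < / (INR k + 1))) as [th [_ [Hth Hk]]].
  { intros k N; pose proof (inv_succ_pos k) as Hd.
    destruct (Hl (disc l (mkposreal _ Hd)) N) as [n [Hn1 Hn2]].
    - exists (mkposreal _ Hd); intros y Hy; exact Hy.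
    - exists n, tt; split; auto. }
  exists th, l; split; auto.
  intros eps He; destruct (inv_succ_eventually_lt eps He) as [N HN]; exists N; intros n Hn.
  eapply Rlt_trans; [apply Hk | apply HN, Hn].
Qed.

(** * Sequences in a Hilbert space: uniform boundedness and weak compactness *)

Section HilbertSequences.

Context {E : Hilbert}.

Lemma hilbert_complete (u : nat -> E) :
  (forall eps, eps > 0 -> exists N, forall m n, (N <= m)%nat -> (N <= n)%nat ->
     hnorm (hsub (u m) (u n)) < eps) ->
  exists l, norm_conv u l.
Proof. apply hcomplete. Qed.

Lemma norm_conv_unique (u : nat -> E) a b : norm_conv u a -> norm_conv u b -> a = b.
Proof.
  intros Ha Hb; apply hsub_eq0, hnorm_eq0, Rle_antisym; [| apply hnorm_ge0].
  apply Rnot_lt_le; intro Hlt.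
  destruct (Ha (hnorm (hsub a b) / 2)) as [N1 H1]; [lra |].
  destruct (Hb (hnorm (hsub a b) / 2)) as [N2 H2]; [lra |].
  specialize (H1 (max N1 N2) (Nat.le_max_l _ _)); specialize (H2 (max N1 N2) (Nat.le_max_r _ _)).
  pose proof (hnorm_sub_triangle a (u (max N1 N2)) b) as Ht.
  rewrite (hnorm_sub_sym a (u (max N1 N2))) in Ht; lra.
Qed.

Lemma norm_conv_inner (u : nat -> E) l v :
  norm_conv u l -> Un_cv (fun n => inner (u n) v) (inner l v).
Proof.
  intros H eps Heps; pose proof (hnorm_ge0 v).
  destruct (H (eps / (hnorm v + 1))) as [N HN]; [apply Rdiv_lt_0_compat; lra |].
  exists N; intros n Hn; unfold Rdist; specialize (HN n Hn).
  rewrite <- inner_sub_l; eapply Rle_lt_trans; [apply Cauchy_Schwarz |].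
  apply (Rmult_lt_compat_r (hnorm v + 1)) in HN; [| lra].
  unfold Rdiv in HN; rewrite Rmult_assoc, Rinv_l, Rmult_1_r in HN by lra.
  pose proof (hnorm_ge0 (hsub (u n) l)); nra.
Qed.

Lemma norm_conv_inner_l (u : nat -> E) l v :
  norm_conv u l -> Un_cv (fun n => inner v (u n)) (inner v l).
Proof.
  intro H; rewrite inner_sym; eapply Un_cv_ext; [intro; apply inner_sym |].
  now apply norm_conv_inner.
Qed.

Lemma norm_conv_weak (u : nat -> E) l : norm_conv u l -> weak_conv u l.
Proof. intros H v; now apply norm_conv_inner. Qed.

Lemma norm_conv_hnorm (u : nat -> E) l c :
  norm_conv u l -> Un_cv (fun n => hnorm (hsub (u n) c)) (hnorm (hsub l c)).
Proof.
  intros H eps Heps; destruct (H eps Heps) as [N HN]; exists N; intros n Hn.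
  specialize (HN n Hn); unfold Rdist.
  pose proof (hnorm_sub_triangle (u n) l c); pose proof (hnorm_sub_triangle l (u n) c) as Ht.
  rewrite (hnorm_sub_sym l (u n)) in Ht; apply Rabs_def1; lra.
Qed.

Lemma weak_conv_subseq (y : nat -> E) l th :
  weak_conv y l -> sincr th -> weak_conv (fun k => y (th k)) l.
Proof. intros H Hth v; now apply (Un_cv_subseq (fun n => inner (y n) v)). Qed.

Lemma norm_conv_of_dist_lt (u : nat -> E) l (d : nat -> R) :
  (forall n, hnorm (hsub (u n) l) < d n) -> Un_cv d 0 -> norm_conv u l.
Proof.
  intros Hd Hcv eps He; destruct (Hcv eps He) as [N HN]; exists N; intros n Hn.
  specialize (HN n Hn); unfold Rdist in HN; rewrite Rminus_0_r in HN.
  pose proof (Rle_abs (d n)); specialize (Hd n); lra.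
Qed.

Lemma geometric_steps_cv (s : nat -> E) beta r : 0 <= r < 1 ->
  (forall k, hnorm (hsub (s (S k)) (s k)) <= beta * r ^ k) ->
  exists l, norm_conv s l /\ forall k, hnorm (hsub l (s k)) <= beta * r ^ k / (1 - r).
Proof.
  intros Hr Hs.
  assert (Hb : 0 <= beta) by (specialize (Hs O); pose proof (hnorm_ge0 (hsub (s 1%nat) (s O))); simpl in Hs; lra).
  assert (Hpow : forall k, 0 <= r ^ k) by (intro; apply pow_le; lra).
  assert (Hc : forall k m, (k <= m)%nat ->
            hnorm (hsub (s m) (s k)) <= beta * (r ^ k - r ^ m) / (1 - r)).
  { intros k m Hkm; induction Hkm.
    - rewrite hnorm_sub_diag; unfold Rdiv; rewrite Rminus_diag; lra.
    - eapply Rle_trans; [apply (hnorm_sub_triangle _ (s m)) |].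
      replace (beta * (r ^ k - r ^ S m) / (1 - r))
        with (beta * r ^ m + beta * (r ^ k - r ^ m) / (1 - r)) by (simpl; field; lra).
      specialize (Hs m); lra. }
  assert (Hc' : forall k m, (k <= m)%nat -> hnorm (hsub (s m) (s k)) <= beta * r ^ k / (1 - r)).
  { intros k m Hkm; eapply Rle_trans; [apply Hc, Hkm |].
    apply Rmult_le_compat_r; [apply Rlt_le, Rinv_0_lt_compat; lra |].
    specialize (Hpow m); nra. }
  destruct (hilbert_complete s) as [l Hl].
  { intros eps He.
    destruct (pow_lt_1_zero r ltac:(rewrite Rabs_pos_eq; lra) (eps * (1 - r) / (beta + 1)))
      as [N HN]; [apply Rdiv_lt_0_compat; nra |].
    assert (Hk : forall k j, (N <= k)%nat -> (k <= j)%nat -> hnorm (hsub (s j) (s k)) < eps).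
    { intros k j Hk Hkj; eapply Rle_lt_trans; [apply Hc', Hkj |].
      specialize (HN k Hk); rewrite Rabs_pos_eq in HN by apply Hpow.
      apply (Rmult_lt_compat_l (beta + 1)) in HN; [| lra].
      replace ((beta + 1) * (eps * (1 - r) / (beta + 1))) with (eps * (1 - r)) in HN by (field; lra).
      apply (Rmult_lt_reg_r (1 - r)); [lra |].
      replace (beta * r ^ k / (1 - r) * (1 - r)) with (beta * r ^ k) by (field; lra).
      specialize (Hpow k); nra. }
    exists N; intros m n Hm Hn; destruct (Nat.le_ge_cases m n).
    - rewrite hnorm_sub_sym; auto.
    - auto. }
  exists l; split; auto; intro k.
  apply (Un_cv_le_eventually (fun m => hnorm (hsub (s m) (s k)))); [now apply norm_conv_hnorm |].
  exists k; apply Hc'.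
Qed.

End HilbertSequences.

Lemma gliding_hump_step {E : Hilbert} (w s v : E) M K r :
  0 < r -> 0 <= M -> 0 <= K -> 3 * (M + K + 1) < hnorm w * r -> Rabs (inner w s) <= M ->
  hnorm (hsub v (hadd s (hscal (r / hnorm w) w))) <= r / 3 -> K + 1 <= inner w v.
Proof.
  intros Hr HM HK Hw Hs Hv; pose proof (Rabs_pos (inner w s)); apply Rabs_le_inv in Hs.
  assert (Hw0 : 0 < hnorm w) by (pose proof (hnorm_ge0 w); nra).
  replace (inner w v) with (inner w s + hnorm w * r + inner w (hsub v (hadd s (hscal (r / hnorm w) w))))
    by (rewrite inner_sub_r, inner_add_r, inner_scal_r, <- hnorm_sq; field; lra).
  pose proof (inner_ge_hnorm w (hsub v (hadd s (hscal (r / hnorm w) w)))).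
  assert (hnorm w * hnorm (hsub v (hadd s (hscal (r / hnorm w) w))) <= hnorm w * (r / 3))
    by (apply Rmult_le_compat_l; lra).
  lra.
Qed.

Lemma weak_conv_bounded {E : Hilbert} (z : nat -> E) zeta :
  weak_conv z zeta -> exists B, forall n, hnorm (z n) <= B.
Proof.
  intro Hw; apply NNPP; intro Hnb.
  destruct (choice (fun v M => forall n, Rabs (inner (z n) v) <= M)) as [M HM].
  { intro v; apply (Un_cv_bounded _ _ (Hw v)). }
  assert (HM0 : forall v, 0 <= M v) by (intro v; eapply Rle_trans; [apply Rabs_pos | apply (HM v O)]).
  assert (H4 : forall j, 0 < (/ 4) ^ j) by (intro; apply pow_lt; lra).
  (* the gliding hump: at stage j pick a term of z that dominates all that was built so far *)
  destruct (choice (fun (js : nat * E) k =>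
              hnorm (z k) * (/ 4) ^ fst js > 3 * (M (snd js) + INR (fst js) + 1))) as [hump Hhump].
  { intros [j s]; apply NNPP; intro Hno; apply Hnb.
    exists (3 * (M s + INR j + 1) / (/ 4) ^ j); intro n; apply Rnot_lt_le; intro Hn.
    apply Hno; exists n; simpl.
    apply (Rmult_lt_compat_r ((/ 4) ^ j)) in Hn; [| apply H4].
    unfold Rdiv in Hn; rewrite Rmult_assoc, Rinv_l, Rmult_1_r in Hn by (specialize (H4 j); lra); lra. }
  pose (u := fun j s => z (hump (j, s))).
  pose (s := fix s j := match j with
                        | O => hzero
                        | S j => hadd (s j) (hscal ((/ 4) ^ j / hnorm (u j (s j))) (u j (s j)))
                        end).
  assert (Hu : forall j, 3 * (M (s j) + INR j + 1) < hnorm (u j (s j)) * (/ 4) ^ j)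
    by (intro j; apply (Hhump (j, s j))).
  assert (Hu0 : forall j, 0 < hnorm (u j (s j))).
  { intro j; specialize (Hu j); specialize (HM0 (s j)); pose proof (pos_INR j).
    pose proof (hnorm_ge0 (u j (s j))); specialize (H4 j); nra. }
  destruct (geometric_steps_cv s 1 (/ 4)) as [v [_ Hv]]; [lra | |].
  { intro j; simpl; replace (hsub _ (s j)) with (hscal ((/ 4) ^ j / hnorm (u j (s j))) (u j (s j)))
      by hring.
    rewrite hnorm_scal, Rabs_pos_eq by (apply Rlt_le, Rdiv_lt_0_compat; auto).
    right; field; specialize (Hu0 j); lra. }
  assert (Hlarge : forall j, INR j + 1 <= inner (u j (s j)) v).
  { intro j; apply (gliding_hump_step (u j (s j)) (s j) v (M (s j)) (INR j) ((/ 4) ^ j)); auto.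
    - apply pos_INR.
    - apply (HM (s j) (hump (j, s j))).
    - change (hadd (s j) _) with (s (S j)); eapply Rle_trans; [apply Hv | simpl; right; field]. }
  destruct (INR_unbounded (M v)) as [j Hj].
  pose proof (HM v (hump (j, s j))) as Hb; apply Rabs_le_inv in Hb.
  specialize (Hlarge j); unfold u in Hlarge; lra.
Qed.

Lemma diagonal_cv_subseq (a : nat -> nat -> R) M :
  (forall m n, Rabs (a m n) <= M) ->
  exists phi, sincr phi /\ forall m, exists l, Un_cv (fun k => a m (phi k)) l.
Proof.
  intro HM.
  destruct (choice (fun (pm : (nat -> nat) * nat) th =>
              sincr th /\ exists l, Un_cv (fun k => a (snd pm) (fst pm (th k))) l)) as [ext Hext].
  { intros [psi m]; destruct (bounded_seq_cv_subseq (fun n => a m (psi n)) M) as [th [l [H1 H2]]].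
    - intro; apply HM.
    - exists th; split; eauto. }
  (* Psi (m + 1) refines Psi m so that row m converges along it *)
  pose (Psi := fix Psi m := match m with
                            | O => fun k => k
                            | S m => fun k => Psi m (ext (Psi m, m) k)
                            end).
  assert (Hinc : forall m, sincr (Psi m)).
  { induction m; simpl; [intro k; lia | apply sincr_comp; auto; apply (Hext (Psi m, m))]. }
  assert (Hrefine : forall i j, (i <= j)%nat ->
            exists rho, sincr rho /\ forall k, Psi j k = Psi i (rho k)).
  { intros i j Hij; induction Hij.
    - exists (fun k => k); split; [intro; lia | reflexivity].
    - destruct IHHij as [rho [Hr1 Hr2]].
      exists (fun k => rho (ext (Psi m, m) k)); split; [apply sincr_comp; auto; apply (Hext (Psi m, m)) |].
      intro k; apply Hr2. }
  exists (fun k => Psi (S k) k); split.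
  - intro k; change (Psi (S k) k < Psi (S k) (ext (Psi (S k), S k) (S k)))%nat.
    pose proof (proj1 (Hext (Psi (S k), S k))) as Hth.
    apply Nat.lt_le_trans with (Psi (S k) (S k)); [apply (Hinc (S k) k) |].
    apply sincr_le; [apply Hinc |]; apply (sincr_ge _ Hth (S k)).
  - intro m; destruct (proj2 (Hext (Psi m, m))) as [l Hl]; exists l.
    intros eps He; destruct (Hl eps He) as [N HN]; exists (max N m); intros k Hk.
    destruct (Hrefine (S m) (S k) ltac:(lia)) as [rho [Hr1 Hr2]].
    rewrite Hr2; apply HN; pose proof (sincr_ge rho Hr1 k); lia.
Qed.

Lemma quadratic_ge0_linear_zero d q : 0 <= q -> (forall s, 0 <= 2 * s * d + s * s * q) -> d = 0.
Proof.
  intros Hq H; specialize (H (- d / (q + 1))).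
  replace (2 * (- d / (q + 1)) * d + - d / (q + 1) * (- d / (q + 1)) * q)
    with (- (d * d) * (q + 2) / ((q + 1) * (q + 1))) in H by (field; lra).
  assert (0 < (q + 1) * (q + 1)) by nra.
  apply (Rmult_le_compat_r ((q + 1) * (q + 1))) in H; [| lra].
  unfold Rdiv in H; rewrite Rmult_0_l, Rmult_assoc, Rinv_l, Rmult_1_r in H by lra; nra.
Qed.

Section RieszClosedSubspace.

Context {E : Hilbert}.
Variable C : E -> Prop.
Variables (L : E -> R) (K : R).
Hypothesis C0 : C hzero.
Hypothesis Cadd : forall a b, C a -> C b -> C (hadd a b).
Hypothesis Cscal : forall r a, C a -> C (hscal r a).
Hypothesis Cclosed : forall u l, (forall n, C (u n)) -> norm_conv u l -> C l.
Hypothesis Ladd : forall a b, C a -> C b -> L (hadd a b) = L a + L b.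
Hypothesis Lscal : forall r a, C a -> L (hscal r a) = r * L a.
Hypothesis Lbound : forall a, C a -> Rabs (L a) <= K * hnorm a.

Let J a := inner a a - 2 * L a.

Lemma riesz_parallelogram a b : C a -> C b ->
  inner (hsub a b) (hsub a b) = 2 * (J a + J b) - 4 * J (hscal (/ 2) (hadd a b)).
Proof.
  intros Ha Hb; unfold J; rewrite Lscal, Ladd by auto.
  rewrite !inner_sub_l, !inner_sub_r, !inner_scal_l, !inner_scal_r, !inner_add_l, !inner_add_r.
  rewrite (inner_sym b a); field.
Qed.

Lemma riesz_minimizing_seq :
  exists (g : R) (an : nat -> E), (forall a, C a -> g <= J a) /\
    forall n, C (an n) /\ J (an n) < g + / (INR n + 1).
Proof.
  destruct (real_glb (fun r => exists a, C a /\ r = J a)) as [g [Hg1 Hg2]].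
  { exists (J hzero); eauto. }
  { exists (- (K * K)); intros r [a [Ha ->]]; unfold J.
    specialize (Lbound a Ha); apply Rabs_le_inv in Lbound.
    rewrite <- hnorm_sq; pose proof (Rle_0_sqr (hnorm a - K)); unfold Rsqr in *; nra. }
  destruct (choice (fun n a => C a /\ J a < g + / (INR n + 1))) as [an Han].
  { intro n; pose proof (inv_succ_pos n); apply NNPP; intro Hn.
    assert (g + / (INR n + 1) <= g); [| lra].
    apply Hg2; intros r [a [Ha ->]]; apply Rnot_lt_le; intro; apply Hn; eauto. }
  exists g, an; split; auto; intros a Ha; apply Hg1; eauto.
Qed.

Lemma riesz_representation : exists y, C y /\ forall c, C c -> inner y c = L c.
Proof.
  destruct riesz_minimizing_seq as [g [an [Hge Han]]].
  destruct (hilbert_complete an) as [y Hy].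
  { intros eps He; destruct (inv_succ_eventually_lt (eps * eps / 4)) as [N HN]; [nra |].
    exists N; intros m n Hm Hn; apply hnorm_lt_sq; [lra |].
    destruct (Han m) as [Cm Jm], (Han n) as [Cn Jn].
    rewrite riesz_parallelogram by auto.
    pose proof (Hge _ (Cscal (/ 2) _ (Cadd _ _ Cm Cn))).
    pose proof (HN m Hm); pose proof (HN n Hn); lra. }
  exists y; split; [apply (Cclosed an y); [intro; apply Han | exact Hy] |].
  intros c Hc; apply Rminus_diag_uniq, (quadratic_ge0_linear_zero _ (inner c c) (inner_pos c)).
  intro s.
  (* first-order optimality of the minimising sequence in the direction c *)
  apply (Un_cv_ge_eventually (fun n => 2 * s * (inner (an n) c - L c) + s * s * inner c c + / (INR n + 1))).
  - rewrite <- (Rplus_0_r (_ + _)); apply CV_plus; [| apply Un_cv_inv_succ].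
    apply CV_plus; [| apply Un_cv_const]; apply CV_mult; [apply Un_cv_const |].
    apply CV_minus; [now apply norm_conv_inner | apply Un_cv_const].
  - exists O; intros n _; destruct (Han n) as [Cn Jn].
    pose proof (Hge _ (Cadd _ _ Cn (Cscal s c Hc))) as Hs.
    unfold J in Hs, Jn; rewrite Ladd, Lscal in Hs by auto.
    rewrite inner_add_l, !inner_add_r, !inner_scal_l, !inner_scal_r, (inner_sym c (an n)) in Hs; lra.
Qed.

End RieszClosedSubspace.

Section WeakCompactness.

Context {E : Hilbert}.
Variables (y : nat -> E) (B : R).
Hypothesis Hy : forall k, hnorm (y k) <= B.

Let Cv c := exists l, Un_cv (fun k => inner (y k) c) l.

Lemma inner_cv_closed (u : nat -> E) c : (forall n, Cv (u n)) -> norm_conv u c -> Cv c.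
Proof.
  intros Hu Huc; cut (Cauchy_crit (fun k => inner (y k) c)).
  { intro Hc; destruct (R_complete _ Hc) as [l Hl]; exists l; exact Hl. }
  intros eps He.
  assert (HB : 0 <= B) by (eapply Rle_trans; [apply (hnorm_ge0 (y O)) | apply Hy]).
  destruct (Huc (eps / (4 * (B + 1)))) as [I HI]; [apply Rdiv_lt_0_compat; lra |].
  specialize (HI I (Nat.le_refl _)); rewrite hnorm_sub_sym in HI.
  destruct (Hu I) as [li Hli]; destruct (CV_Cauchy _ (exist _ li Hli) (eps / 2)) as [N HN]; [lra |].
  exists N; intros n m Hn Hm; specialize (HN n m Hn Hm); unfold Rdist in *.
  (* split c = u I + (c - u I); the second part contributes at most B |c - u I| twice *)
  assert (Hsmall : forall k, Rabs (inner (y k) (hsub c (u I))) <= eps / 4).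
  { intro k; eapply Rle_trans; [apply Cauchy_Schwarz |].
    pose proof (Hy k); pose proof (hnorm_ge0 (y k)); pose proof (hnorm_ge0 (hsub c (u I))).
    apply Rle_trans with (B * (eps / (4 * (B + 1)))); [nra |].
    apply (Rmult_le_reg_r (4 * (B + 1))); [lra |].
    unfold Rdiv; rewrite Rmult_assoc, (Rmult_assoc eps), Rinv_l, Rmult_1_r by lra; nra. }
  replace (inner (y n) c - inner (y m) c) with
    (inner (y n) (hsub c (u I)) + (inner (y n) (u I) - inner (y m) (u I)) - inner (y m) (hsub c (u I)))
    by (rewrite !inner_sub_r; ring).
  pose proof (Hsmall n) as H1; pose proof (Hsmall m) as H2.
  apply Rabs_le_inv in H1, H2; apply Rabs_def2 in HN; apply Rabs_def1; lra.
Qed.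

Lemma inner_cv_subspace :
  Cv hzero /\ (forall a b, Cv a -> Cv b -> Cv (hadd a b)) /\ (forall r a, Cv a -> Cv (hscal r a)).
Proof.
  split; [| split].
  - exists 0; eapply Un_cv_ext; [| apply Un_cv_const]; intro; simpl; now rewrite inner_zero_r.
  - intros a b [la Ha] [lb Hb]; exists (la + lb).
    eapply Un_cv_ext; [| apply CV_plus; eauto]; intro; simpl; now rewrite inner_add_r.
  - intros r a [la Ha]; exists (r * la).
    eapply Un_cv_ext; [| apply CV_mult; [apply Un_cv_const | eauto]]; intro; simpl.
    now rewrite inner_scal_r.
Qed.

Lemma weak_conv_of_inner_cv : (forall k, Cv (y k)) -> exists yb, weak_conv y yb.
Proof.
  intro Hyk; destruct inner_cv_subspace as [C0 [Cadd Cscal]].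
  destruct (choice (fun c l => Cv c -> Un_cv (fun k => inner (y k) c) l)) as [L HL].
  { intro c; destruct (classic (Cv c)) as [[l Hl] | Hn]; [exists l | exists 0]; tauto. }
  assert (Ladd : forall a b, Cv a -> Cv b -> L (hadd a b) = L a + L b).
  { intros a b Ha Hb; apply (UL_sequence (fun k => inner (y k) (hadd a b))); [apply HL; auto |].
    eapply Un_cv_ext; [| apply CV_plus; apply HL; eauto]; intro; simpl; now rewrite inner_add_r. }
  assert (Lscal : forall r a, Cv a -> L (hscal r a) = r * L a).
  { intros r a Ha; apply (UL_sequence (fun k => inner (y k) (hscal r a))); [apply HL; auto |].
    eapply Un_cv_ext; [| apply CV_mult; [apply Un_cv_const | apply HL; eauto]].
    intro; simpl; now rewrite inner_scal_r. }
  assert (Lbound : forall a, Cv a -> Rabs (L a) <= B * hnorm a).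
  { intros a Ha; apply Rabs_le; pose proof (hnorm_ge0 a).
    assert (Hk : forall k, Rabs (inner (y k) a) <= B * hnorm a).
    { intro k; eapply Rle_trans; [apply Cauchy_Schwarz | apply Rmult_le_compat_r; auto]. }
    split; [apply (Un_cv_ge_eventually _ _ _ (HL a Ha)) | apply (Un_cv_le_eventually _ _ _ (HL a Ha))];
      exists O; intros k _; specialize (Hk k); apply Rabs_le_inv in Hk; lra. }
  destruct (riesz_representation Cv L B C0 Cadd Cscal inner_cv_closed Ladd Lscal Lbound)
    as [yb [Cyb Hyb]].
  exists yb; intro v.
  (* replace v by its projection P onto the closed subspace Cv *)
  destruct (riesz_representation Cv (fun c => inner v c) (hnorm v) C0 Cadd Cscal inner_cv_closed)
    as [P [CP HP]].
  { intros; apply inner_add_r. }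
  { intros; apply inner_scal_r. }
  { intros a _; apply Cauchy_Schwarz. }
  apply (Un_cv_ext (fun k => inner (y k) P)).
  { intro k; rewrite inner_sym, HP by apply Hyk; apply inner_sym. }
  replace (inner yb v) with (L P); [now apply HL |].
  rewrite <- Hyb, inner_sym, HP by auto; apply inner_sym.
Qed.

End WeakCompactness.

Lemma weak_compact {E : Hilbert} (x : nat -> E) B :
  (forall n, hnorm (x n) <= B) -> exists phi xb, sincr phi /\ weak_conv (fun k => x (phi k)) xb.
Proof.
  intro HB; assert (HB0 : 0 <= B) by (eapply Rle_trans; [apply (hnorm_ge0 (x O)) | apply (HB O)]).
  destruct (diagonal_cv_subseq (fun m n => inner (x n) (x m)) (B * B)) as [phi [Hphi Hconv]].
  { intros m n; eapply Rle_trans; [apply Cauchy_Schwarz |].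
    pose proof (HB n); pose proof (HB m); pose proof (hnorm_ge0 (x n)); pose proof (hnorm_ge0 (x m)); nra. }
  destruct (weak_conv_of_inner_cv (fun k => x (phi k)) B) as [xb Hxb]; [intro; apply HB | intro; apply Hconv |].
  exists phi, xb; auto.
Qed.

(** * A smooth variational principle *)

Definition ERplus (a : ER) (r : R) : ER := match a with Fin x => Fin (x + r) | _ => a end.

Section Continuity.

Context {E : Hilbert}.

Definition hcontinuous (q : E -> R) : Prop :=
  forall y eps, eps > 0 -> exists delta, delta > 0 /\
    forall y', hnorm (hsub y' y) < delta -> Rabs (q y' - q y) < eps.

Lemma hcontinuous_ext (q1 q2 : E -> R) : (forall y, q1 y = q2 y) -> hcontinuous q1 -> hcontinuous q2.
Proof.
  intros H Hc y eps He; destruct (Hc y eps He) as [d [Hd Hd']].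
  exists d; split; auto; intros; rewrite <- !H; auto.
Qed.

Lemma hcontinuous_const c : hcontinuous (fun _ => c).
Proof. intros y eps He; exists 1; split; [lra |]; intros; rewrite Rminus_diag, Rabs_R0; lra. Qed.

Lemma hcontinuous_plus (q1 q2 : E -> R) :
  hcontinuous q1 -> hcontinuous q2 -> hcontinuous (fun y => q1 y + q2 y).
Proof.
  intros H1 H2 y eps He.
  destruct (H1 y (eps / 2)) as [d1 [Hd1 H1']]; [lra |].
  destruct (H2 y (eps / 2)) as [d2 [Hd2 H2']]; [lra |].
  exists (Rmin d1 d2); split; [apply Rmin_pos; lra |]; intros y' Hy'.
  pose proof (Rmin_l d1 d2); pose proof (Rmin_r d1 d2).
  specialize (H1' y' ltac:(lra)); specialize (H2' y' ltac:(lra)).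
  replace (q1 y' + q2 y' - (q1 y + q2 y)) with ((q1 y' - q1 y) + (q2 y' - q2 y)) by ring.
  eapply Rle_lt_trans; [apply Rabs_triang | lra].
Qed.

Lemma hcontinuous_scal (q : E -> R) a : hcontinuous q -> hcontinuous (fun y => a * q y).
Proof.
  intros H y eps He; pose proof (Rabs_pos a).
  destruct (H y (eps / (Rabs a + 1))) as [d [Hd H']]; [apply Rdiv_lt_0_compat; lra |].
  exists d; split; auto; intros y' Hy'; specialize (H' y' Hy').
  rewrite <- Rmult_minus_distr_l, Rabs_mult.
  apply (Rmult_lt_compat_l (Rabs a + 1)) in H'; [| lra].
  replace ((Rabs a + 1) * (eps / (Rabs a + 1))) with eps in H' by (field; lra).
  pose proof (Rabs_pos (q y' - q y)); nra.
Qed.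

Lemma hcontinuous_inner (a : E) : hcontinuous (fun y => inner a y).
Proof.
  intros y eps He; pose proof (hnorm_ge0 a).
  exists (eps / (hnorm a + 1)); split; [apply Rdiv_lt_0_compat; lra |]; intros y' Hy'.
  rewrite <- inner_sub_r; eapply Rle_lt_trans; [apply Cauchy_Schwarz |].
  apply (Rmult_lt_compat_l (hnorm a + 1)) in Hy'; [| lra].
  replace ((hnorm a + 1) * (eps / (hnorm a + 1))) with eps in Hy' by (field; lra).
  pose proof (hnorm_ge0 (hsub y' y)); nra.
Qed.

Lemma hcontinuous_sqdist (a : E) : hcontinuous (fun y => inner (hsub y a) (hsub y a)).
Proof.
  intros y eps He; pose proof (hnorm_ge0 (hsub y a)); set (r := hnorm (hsub y a)) in *.
  exists (Rmin 1 (eps / (2 * r + 2))); split.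
  { apply Rmin_pos; [| apply Rdiv_lt_0_compat]; lra. }
  intros y' Hy'; pose proof (Rmin_l 1 (eps / (2 * r + 2))); pose proof (Rmin_r 1 (eps / (2 * r + 2))).
  replace (inner (hsub y' a) (hsub y' a) - inner (hsub y a) (hsub y a))
    with (inner (hsub y' y) (hadd (hsub y' a) (hsub y a))).
  2: { rewrite !inner_sub_l, !inner_add_r, !inner_sub_r, (inner_sym y' y), (inner_sym a y'),
         (inner_sym a y); ring. }
  eapply Rle_lt_trans; [apply Cauchy_Schwarz |].
  pose proof (hnorm_add_le (hsub y' a) (hsub y a)) as Ha.
  pose proof (hnorm_sub_triangle y' y a) as Hb; pose proof (hnorm_ge0 (hsub y' y)); fold r in Ha, Hb.
  apply Rle_lt_trans with (hnorm (hsub y' y) * (2 * r + 2)); [apply Rmult_le_compat_l; lra |].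
  apply Rlt_le_trans with (eps / (2 * r + 2) * (2 * r + 2)); [apply Rmult_lt_compat_r; lra |].
  right; field; lra.
Qed.

Lemma hcontinuous_penalty (zeta u : E) sigma :
  hcontinuous (fun y => - inner zeta y + sigma * inner (hsub y u) (hsub y u)).
Proof.
  apply hcontinuous_plus; [| apply hcontinuous_scal, hcontinuous_sqdist].
  apply (hcontinuous_ext (fun y => -1 * inner zeta y)); [intro; ring |].
  apply hcontinuous_scal, hcontinuous_inner.
Qed.

Lemma lsc_sublevel_closed (G : E -> ER) (q : E -> R) (u : nat -> E) v c N :
  lsc G -> hcontinuous q -> norm_conv u v ->
  (forall n, (N <= n)%nat -> ERle (ERplus (G (u n)) (q (u n))) (Fin c)) ->
  ERle (ERplus (G v) (q v)) (Fin c).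
Proof.
  intros HG Hq Hu Hn; apply NNPP; intro Hc.
  assert (Hm : exists eta, eta > 0 /\ ERlt (Fin (c - q v + eta)) (G v)).
  { destruct (G v) as [g| |]; simpl in Hc; [| | tauto].
    - exists ((g + q v - c) / 2); split; [lra |]; split; simpl; [lra |].
      intro Heq; injection Heq; lra.
    - exists 1; split; [lra |]; split; simpl; [auto | discriminate]. }
  destruct Hm as [eta [He Hlt]].
  destruct (HG v _ Hlt) as [d [Hd Hd']]; destruct (Hq v eta He) as [d2 [Hd2 Hd2']].
  destruct (Hu (Rmin d d2)) as [M HM]; [apply Rmin_pos; lra |].
  set (n := max N M).
  specialize (HM n (Nat.le_max_r _ _)); specialize (Hn n (Nat.le_max_l _ _)).
  pose proof (Rmin_l d d2); pose proof (Rmin_r d d2).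
  specialize (Hd' (u n) ltac:(lra)); specialize (Hd2' (u n) ltac:(lra)).
  apply Rabs_def2 in Hd2'; destruct Hd' as [Hd' _].
  destruct (G (u n)); simpl in *; auto; lra.
Qed.

End Continuity.

Fixpoint hsum {E : Hilbert} (a : nat -> E) (k : nat) : E :=
  match k with O => hzero | S k => hadd (hsum a k) (a k) end.

Section SmoothVariationalPrinciple.

Context {E : Hilbert}.
Variables (G : E -> ER) (m0 g0 kappa : R) (x0 : E).
Hypothesis G_nomin : forall x, G x <> MInf.
Hypothesis G_lsc : lsc G.
Hypothesis G_ge : forall x, ERle (Fin m0) (G x).
Hypothesis G_x0 : G x0 = Fin g0.
Hypothesis kappa_pos : kappa > 0.

Lemma approx_minimizer (Q : E -> R) x c e :
  (forall y, 0 <= Q y) -> ERplus (G x) (Q x) = Fin c -> e > 0 ->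
  exists x', ERle (ERplus (G x') (Q x')) (ERplus (G x) (Q x)) /\
    forall y, ERle (ERplus (G x') (Q x')) (ERplus (ERplus (G y) (Q y)) e).
Proof.
  intros HQ Hx He.
  destruct (real_glb (fun r => exists y, ERplus (G y) (Q y) = Fin r)) as [g [Hg1 Hg2]]; [eauto | |].
  { exists m0; intros r [y Hy]; specialize (G_ge y); specialize (HQ y).
    destruct (G y); simpl in *; try discriminate; injection Hy; lra. }
  assert (Hall : forall r, r < g + e -> forall y, ERle (Fin r) (ERplus (ERplus (G y) (Q y)) e)).
  { intros r Hr y; specialize (G_nomin y).
    destruct (ERplus (G y) (Q y)) as [s| |] eqn:Hs; simpl; auto.
    - specialize (Hg1 s ltac:(eauto)); lra.
    - destruct (G y); simpl in Hs; congruence. }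
  destruct (classic (exists y r, ERplus (G y) (Q y) = Fin r /\ r < g + e)) as [[y [r [Hy Hr]]] | Hn].
  2: { assert (g + e <= g); [| lra].
       apply Hg2; intros r [y Hy]; apply Rnot_lt_le; intro; apply Hn; eauto. }
  destruct (Rle_dec r c).
  - exists y; rewrite Hy, Hx; split; [simpl; lra | intro; apply Hall, Hr].
  - exists x; rewrite Hx; split; [simpl; lra | intro; apply Hall; lra].
Qed.

Let e0 := g0 - m0 + 1.
Let mu0 := kappa * kappa / (16 * e0).
Let mu k := mu0 * (/ 2) ^ k.
Let tol k := e0 * (/ 8) ^ k.
Let rho := 4 * e0 / kappa.

Lemma vp_e0_pos : e0 > 0.
Proof. specialize (G_ge x0); rewrite G_x0 in G_ge; simpl in G_ge; unfold e0; lra. Qed.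

Lemma vp_mu_pos k : mu k > 0.
Proof.
  pose proof vp_e0_pos; pose proof (pow_lt (/ 2) k ltac:(lra)).
  unfold mu, mu0; apply Rmult_lt_0_compat; [apply Rdiv_lt_0_compat |]; nra.
Qed.

Lemma vp_tol_pos k : tol k > 0.
Proof. pose proof vp_e0_pos; pose proof (pow_lt (/ 8) k ltac:(lra)); unfold tol; nra. Qed.

Lemma vp_tol_div_mu k : tol k / mu k = (rho * (/ 2) ^ k) * (rho * (/ 2) ^ k).
Proof.
  pose proof vp_e0_pos; pose proof (pow_lt (/ 2) k ltac:(lra)).
  unfold tol, mu, rho, mu0.
  replace ((/ 8) ^ k) with ((/ 2) ^ k * (/ 2) ^ k * (/ 2) ^ k) by (rewrite <- !Rpow_mult_distr; f_equal; lra).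
  field; lra.
Qed.

Section Iteration.

(* Q k is the accumulated quadratic penalty and X k the k-th approximate minimiser of G + Q k. *)
Variables (Q : nat -> E -> R) (X : nat -> E).
Hypothesis Q0 : forall y, Q O y = 0.
Hypothesis QS : forall k y, Q (S k) y = Q k y + mu k * inner (hsub y (X k)) (hsub y (X k)).
Hypothesis X0 : X O = x0.
Hypothesis X_descent : forall k,
  ERle (ERplus (G (X (S k))) (Q (S k) (X (S k)))) (ERplus (G (X k)) (Q (S k) (X k))).
Hypothesis X_approx_min : forall k y,
  ERle (ERplus (G (X (S k))) (Q (S k) (X (S k)))) (ERplus (ERplus (G y) (Q (S k) y)) (tol (S k))).

Let F k y := ERplus (G y) (Q k y).

Lemma vp_penalty_continuous k : hcontinuous (Q k).
Proof.
  induction k.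
  - apply (hcontinuous_ext (fun _ => 0)); [intro; now rewrite Q0 | apply hcontinuous_const].
  - apply (hcontinuous_ext (fun y => Q k y + mu k * inner (hsub y (X k)) (hsub y (X k))));
      [intro; now rewrite QS |].
    apply hcontinuous_plus, hcontinuous_scal, hcontinuous_sqdist; auto.
Qed.

Lemma vp_F_S_at_X k : F (S k) (X k) = F k (X k).
Proof.
  unfold F; rewrite QS; replace (inner (hsub (X k) (X k)) (hsub (X k) (X k))) with 0.
  - now rewrite Rmult_0_r, Rplus_0_r.
  - now rewrite <- hnorm_sq, hnorm_sub_diag, Rmult_0_r.
Qed.

Lemma vp_F_X_finite k : exists c, F k (X k) = Fin c.
Proof.
  induction k as [| k IH]; [unfold F; rewrite X0, G_x0, Q0; simpl; eauto |].
  destruct IH as [c Hc].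
  pose proof (X_descent k) as Hd; fold (F (S k) (X (S k))) (F (S k) (X k)) in Hd.
  rewrite vp_F_S_at_X, Hc in Hd; unfold F in *; specialize (G_nomin (X (S k))).
  destruct (G (X (S k))); simpl in *; eauto; tauto.
Qed.

Let c k := match F k (X k) with Fin c => c | _ => 0 end.

Lemma vp_F_X k : F k (X k) = Fin (c k).
Proof. destruct (vp_F_X_finite k) as [ck Hck]; unfold c; now rewrite Hck. Qed.

Lemma vp_level_decr k : c (S k) <= c k.
Proof. pose proof (X_descent k) as Hd; fold (F (S k) (X (S k))) (F (S k) (X k)) in Hd.
  now rewrite vp_F_S_at_X, !vp_F_X in Hd. Qed.

Lemma vp_F_X_near_min k y : ERle (F k (X k)) (ERplus (F k y) (tol k)).
Proof.
  destruct k; [| apply X_approx_min].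
  unfold F; rewrite X0, G_x0, Q0; specialize (G_ge y); specialize (G_x0).
  unfold tol, e0; simpl pow; destruct (G y); simpl in *; auto; rewrite Q0 in *; lra.
Qed.

Let sublevel k y := ERle (F k y) (Fin (c k)).

Lemma vp_sublevel_X k : sublevel k (X k).
Proof. unfold sublevel; rewrite vp_F_X; simpl; lra. Qed.

Lemma vp_sublevel_nested k j y : (k <= j)%nat -> sublevel j y -> sublevel k y.
Proof.
  intro Hkj; induction Hkj; auto; intro Hy; apply IHHkj; unfold sublevel, F in *.
  rewrite QS in Hy; pose proof (vp_level_decr m); pose proof (vp_mu_pos m).
  pose proof (inner_pos (hsub y (X m))); specialize (G_nomin y).
  destruct (G y); simpl in *; try tauto; nra.
Qed.

Lemma vp_sublevel_dist k y : sublevel (S k) y -> hnorm (hsub y (X k)) <= rho * (/ 2) ^ k.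
Proof.
  intro Hy; pose proof (vp_F_X_near_min k y) as Hn; rewrite vp_F_X in Hn.
  assert (Hq : mu k * inner (hsub y (X k)) (hsub y (X k)) <= tol k).
  { unfold sublevel, F in *; rewrite QS in Hy; pose proof (vp_level_decr k); specialize (G_nomin y).
    destruct (G y); simpl in *; try tauto; lra. }
  pose proof (vp_mu_pos k); pose proof (pow_lt (/ 2) k ltac:(lra)).
  assert (rho > 0) by (pose proof vp_e0_pos; unfold rho; apply Rdiv_lt_0_compat; lra).
  apply hnorm_le_sq; [nra |]; rewrite <- vp_tol_div_mu.
  apply (Rmult_le_reg_l (mu k)); auto.
  replace (mu k * (tol k / mu k)) with (tol k) by (field; lra); lra.
Qed.

Lemma vp_X_limit : exists v, norm_conv X v /\ forall k, sublevel k v.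
Proof.
  destruct (geometric_steps_cv X rho (/ 2)) as [v [Hv _]]; [lra | |].
  { intro k; apply vp_sublevel_dist, vp_sublevel_X. }
  exists v; split; auto; intro k.
  apply (lsc_sublevel_closed G (Q k) X v (c k) k G_lsc (vp_penalty_continuous k) Hv).
  intros n Hn; apply (vp_sublevel_nested k n), vp_sublevel_X; auto.
Qed.

Lemma vp_penalty_expansion v k y :
  Q k y - Q k v = 2 * mu0 * (1 - (/ 2) ^ k) * inner (hsub y v) (hsub y v)
                  + 2 * inner (hsub y v) (hsum (fun j => hscal (mu j) (hsub v (X j))) k).
Proof.
  induction k; [rewrite !Q0; simpl; rewrite inner_zero_r; ring |].
  rewrite !QS; simpl; rewrite inner_add_r, inner_scal_r.
  replace (Q k y + _ - _) with (Q k y - Q k v + mu k * (inner (hsub y (X k)) (hsub y (X k))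
                                 - inner (hsub v (X k)) (hsub v (X k)))) by ring.
  rewrite IHk, !inner_sub_l, !inner_sub_r, (inner_sym (X k) y), (inner_sym (X k) v), (inner_sym v y).
  unfold mu; simpl; field.
Qed.

Lemma vp_level_0 : c O = g0.
Proof. pose proof (vp_F_X O) as H0; unfold F in H0; rewrite X0, G_x0, Q0 in H0; injection H0; lra. Qed.

Lemma vp_penalty_gradient_cv v : (forall k, sublevel k v) ->
  exists w, norm_conv (hsum (fun j => hscal (mu j) (hsub v (X j)))) w /\ hnorm w <= kappa / 3.
Proof.
  intro Sv; set (W := hsum (fun j => hscal (mu j) (hsub v (X j)))).
  assert (Hmr : mu0 * rho = kappa / 4) by (pose proof vp_e0_pos; unfold mu0, rho; field; lra).
  destruct (geometric_steps_cv W (kappa / 4) (/ 4)) as [w [Hw Hwb]]; [lra | |].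
  { intro k; unfold W; simpl.
    replace (hsub (hadd _ _) _) with (hscal (mu k) (hsub v (X k))) by hring.
    rewrite hnorm_scal, Rabs_pos_eq by (apply Rlt_le, vp_mu_pos).
    replace (kappa / 4 * (/ 4) ^ k) with (mu k * (rho * (/ 2) ^ k)).
    - apply Rmult_le_compat_l; [apply Rlt_le, vp_mu_pos | apply vp_sublevel_dist, Sv].
    - unfold mu; rewrite <- Hmr.
      replace ((/ 4) ^ k) with ((/ 2) ^ k * (/ 2) ^ k) by (rewrite <- Rpow_mult_distr; f_equal; lra).
      ring. }
  exists w; split; auto.
  specialize (Hwb O); unfold W in Hwb; simpl in Hwb; rewrite hsub_zero_r in Hwb; lra.
Qed.

(* With Q_oo := lim Q k, the point v minimises G + Q_oo, and
   Q_oo y - Q_oo v = 2 mu0 |y - v|^2 + 2 <y - v, w>. *)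
Lemma vp_limit_minimizes v w gv y gy :
  norm_conv X v -> (forall k, sublevel k v) -> norm_conv (hsum (fun j => hscal (mu j) (hsub v (X j)))) w ->
  G v = Fin gv -> G y = Fin gy ->
  gv <= gy + 2 * mu0 * inner (hsub y v) (hsub y v) + 2 * inner (hsub y v) w.
Proof.
  intros Hv Sv Hw HGv HGy; apply Rnot_lt_le; intro Hlt.
  set (T := gy - gv + 2 * mu0 * inner (hsub y v) (hsub y v) + 2 * inner (hsub y v) w).
  assert (HT : T < 0) by (unfold T; lra).
  assert (HTcv : Un_cv (fun k => gy + Q k y - (gv + Q k v)) T).
  { apply (Un_cv_ext (fun k => gy - gv + (2 * mu0 * (1 - (/ 2) ^ k) * inner (hsub y v) (hsub y v)
           + 2 * inner (hsub y v) (hsum (fun j => hscal (mu j) (hsub v (X j))) k)))).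
    { intro k; rewrite <- vp_penalty_expansion; ring. }
    replace T with (gy - gv + (2 * mu0 * (1 - 0) * inner (hsub y v) (hsub y v) + 2 * inner (hsub y v) w))
      by (unfold T; ring).
    apply CV_plus; [apply Un_cv_const | apply CV_plus].
    - apply CV_mult; [| apply Un_cv_const]; apply CV_mult; [apply Un_cv_const |].
      apply CV_minus; [apply Un_cv_const | apply Un_cv_pow; lra].
    - apply CV_mult; [apply Un_cv_const | now apply norm_conv_inner_l]. }
  (* y lies in all late sublevel sets, so X converges to y as well *)
  destruct (Un_cv_eventually_between _ _ (T - 1) (T / 2) HTcv ltac:(lra)) as [K HK].
  assert (Sy : forall k, (K <= k)%nat -> sublevel k y).
  { intros k Hk; specialize (HK k Hk); specialize (Sv k); unfold sublevel, F in *.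
    rewrite HGy; rewrite HGv in Sv; simpl in *; lra. }
  assert (Hxy : norm_conv X y).
  { intros eps He.
    assert (Hrho : rho > 0) by (pose proof vp_e0_pos; unfold rho; apply Rdiv_lt_0_compat; lra).
    destruct (Un_cv_pow (/ 2) ltac:(lra) (eps / rho)) as [N HN]; [apply Rdiv_lt_0_compat; lra |].
    exists (max N K); intros n Hn; rewrite hnorm_sub_sym.
    eapply Rle_lt_trans; [apply vp_sublevel_dist, Sy; lia |].
    specialize (HN n ltac:(lia)); unfold Rdist in HN.
    rewrite Rminus_0_r, Rabs_pos_eq in HN by (apply pow_le; lra).
    apply (Rmult_lt_compat_l rho) in HN; auto.
    replace (rho * (eps / rho)) with eps in HN by (field; lra); lra. }
  pose proof (norm_conv_unique X v y Hv Hxy); subst y.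
  rewrite HGv in HGy; injection HGy as <-.
  rewrite <- hnorm_sq, hnorm_sub_diag, inner_sub_l, Rminus_diag in Hlt; lra.
Qed.

Lemma vp_limit_prox : exists v gv xi S, G v = Fin gv /\ gv <= g0 /\ hnorm xi <= kappa /\ S > 0 /\
  forall y, ERle (Fin (gv + inner xi (hsub y v) - S / 2 * (hnorm (hsub y v)) ^ 2)) (G y).
Proof.
  destruct vp_X_limit as [v [Hv Sv]].
  destruct (vp_penalty_gradient_cv v Sv) as [w [Hw Hwn]].
  destruct (G v) as [gv| |] eqn:HGv.
  3: { exfalso; exact (G_nomin v HGv). }
  2: { exfalso; specialize (Sv O); unfold sublevel, F in Sv; rewrite HGv in Sv; exact Sv. }
  exists v, gv, (hscal (-2) w), (4 * mu0); repeat split; auto.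
  - specialize (Sv O); unfold sublevel, F in Sv; rewrite HGv, Q0, vp_level_0 in Sv; simpl in Sv; lra.
  - rewrite hnorm_scal, Rabs_left by lra; lra.
  - pose proof vp_e0_pos; unfold mu0; apply Rmult_lt_0_compat; [lra | apply Rdiv_lt_0_compat; nra].
  - intro y; destruct (G y) as [gy| |] eqn:HGy; simpl; auto; [| exact (G_nomin y HGy)].
    pose proof (vp_limit_minimizes v w gv y gy Hv Sv Hw HGv HGy).
    rewrite inner_scal_l, Rmult_1_r, hnorm_sq, (inner_sym w); lra.
Qed.

End Iteration.

Lemma smooth_variational_principle :
  exists v gv xi S, G v = Fin gv /\ gv <= g0 /\ hnorm xi <= kappa /\ S > 0 /\
    forall y, ERle (Fin (gv + inner xi (hsub y v) - S / 2 * (hnorm (hsub y v)) ^ 2)) (G y).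
Proof.
  destruct (choice (fun (qxk : (E -> R) * E * nat) x' => let '(Q, x, k) := qxk in
     (forall y, 0 <= Q y) -> (exists c, ERplus (G x) (Q x) = Fin c) ->
     ERle (ERplus (G x') (Q x')) (ERplus (G x) (Q x)) /\
     forall y, ERle (ERplus (G x') (Q x')) (ERplus (ERplus (G y) (Q y)) (tol k)))) as [next Hnext].
  { intros [[Q x] k].
    destruct (classic ((forall y, 0 <= Q y) /\ exists c, ERplus (G x) (Q x) = Fin c))
      as [[HQ [c Hc]] | Hn].
    - destruct (approx_minimizer Q x c (tol k) HQ Hc (vp_tol_pos k)) as [x' Hx']; exists x'; auto.
    - exists x; intros HQ Hc; exfalso; auto. }
  pose (st := fix st k : (E -> R) * E :=
          match k with
          | O => (fun _ => 0, x0)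
          | S k => let Q := fun y => fst (st k) y + mu k * inner (hsub y (snd (st k))) (hsub y (snd (st k))) in
                   (Q, next (Q, snd (st k), S k))
          end).
  assert (Hdiag : forall k, fst (st (S k)) (snd (st k)) = fst (st k) (snd (st k))).
  { intro k; simpl; rewrite <- hnorm_sq, hnorm_sub_diag; ring. }
  assert (Inv : forall k, (forall y, 0 <= fst (st k) y) /\
                  exists c, ERplus (G (snd (st k))) (fst (st k) (snd (st k))) = Fin c).
  { induction k as [| k [HQ Hc]]; [split; [intro; simpl; lra | simpl; rewrite G_x0; eexists; reflexivity] |].
    assert (HQ' : forall y, 0 <= fst (st (S k)) y).
    { intro y; simpl; pose proof (vp_mu_pos k); pose proof (inner_pos (hsub y (snd (st k)))).
      specialize (HQ y); nra. }
    split; auto.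
    rewrite <- Hdiag in Hc; destruct Hc as [c Hc].
    destruct (Hnext (fst (st (S k)), snd (st k), S k) HQ' ltac:(eauto)) as [Hd _].
    change (next _) with (snd (st (S k))) in Hd; rewrite Hc in Hd.
    specialize (G_nomin (snd (st (S k)))).
    destruct (G (snd (st (S k)))); simpl in *; eauto; tauto. }
  apply (vp_limit_prox (fun k => fst (st k)) (fun k => snd (st k))); try reflexivity;
    [intro k | intros k y]; apply (Hnext (fst (st (S k)), snd (st k), S k));
    solve [apply Inv | rewrite Hdiag; apply Inv].
Qed.

End SmoothVariationalPrinciple.

(** * The lower second-order epi-derivative *)

Section SecondOrderEpiDerivative.

Context {E : Hilbert}.
Variables (f : E -> ER) (xb p : E).

Definition Delta2_window (u : E) (delta : R) : ER -> Prop :=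
  fun w => exists t h', 0 < t < delta /\ hnorm (hsub h' u) < delta /\ w = Delta2 f xb p t h'.

Lemma Delta2_cases t u :
  Delta2 f xb p t u = PInf \/ exists a b, f (hadd xb (hscal t u)) = Fin a /\ f xb = Fin b /\
     Delta2 f xb p t u = Fin ((a - b - t * inner p u) / (t ^ 2 / 2)).
Proof. unfold Delta2; destruct (f (hadd xb (hscal t u))), (f xb); auto; right; eauto. Qed.

Lemma Delta2_nomin t y : Delta2 f xb p t y <> MInf.
Proof. unfold Delta2; destruct (f (hadd xb (hscal t y))), (f xb); discriminate. Qed.

Lemma f2lower_approx u c delta eps :
  ERle (f2lower f xb p u) (Fin c) -> delta > 0 -> eps > 0 ->
  exists t h' d, 0 < t < delta /\ hnorm (hsub h' u) < delta /\ Delta2 f xb p t h' = Fin d /\ d <= c + eps.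
Proof.
  intros H Hd He.
  assert (HI : ERle (ERinf (Delta2_window u delta)) (Fin c))
    by (apply (ERle_trans _ (f2lower f xb p u)); [apply le_ERsup; now exists delta | exact H]).
  destruct (ERinf_approx _ _ _ HI He) as [y [Hw Hy]]; destruct Hw as [t [h' [Ht [Hh ->]]]].
  exists t, h'; destruct (Delta2_cases t h') as [Hp | [a [b [_ [_ Hf]]]]].
  - rewrite Hp in Hy; contradiction.
  - rewrite Hf in Hy |- *; simpl in Hy; eexists; repeat split; eauto; lra.
Qed.

(* Second-order difference quotients scale as Delta2(t/lam, lam h) = lam^2 Delta2(t, h). *)
Lemma f2lower_scale_le u a lam :
  ERle (f2lower f xb p u) (Fin a) -> lam > 0 ->
  ERle (f2lower f xb p (hscal lam u)) (Fin (lam * lam * a)).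
Proof.
  intros Ha Hl; apply ERsup_le; intros y [delta [Hd ->]]; apply ERle_Fin_eps; intros eps He.
  set (d' := Rmin (lam * delta) (delta / lam)).
  assert (Hd1 : d' <= lam * delta) by apply Rmin_l.
  assert (Hd2 : d' <= delta / lam) by apply Rmin_r.
  assert (Hd' : d' > 0) by (apply Rmin_pos; [nra | apply Rdiv_lt_0_compat; lra]).
  destruct (f2lower_approx u a d' (eps / (lam * lam)) Ha Hd') as [s [h [d [Hs [Hh [HD Hdle]]]]]].
  { apply Rdiv_lt_0_compat; nra. }
  eapply ERle_trans; [apply ERinf_le; exists (s / lam), (hscal lam h); split; [| split]; [| | reflexivity] |].
  - split; [apply Rdiv_lt_0_compat; lra |].
    apply (Rmult_lt_reg_l lam); [lra |]; replace (lam * (s / lam)) with s by (field; lra); lra.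
  - replace (hsub (hscal lam h) (hscal lam u)) with (hscal lam (hsub h u)) by hring.
    rewrite hnorm_scal, Rabs_pos_eq by lra.
    apply (Rmult_lt_reg_l (/ lam)); [apply Rinv_0_lt_compat; lra |].
    rewrite <- Rmult_assoc, Rinv_l, Rmult_1_l by lra; unfold Rdiv in Hd2; lra.
  - destruct (Delta2_cases s h) as [Hp | [a1 [b [Hf1 [Hf2 HD2]]]]]; [congruence |].
    rewrite HD in HD2; injection HD2 as HD2.
    unfold Delta2; rewrite hscal_assoc.
    replace (s / lam * lam) with s by (field; lra); rewrite Hf1, Hf2.
    replace ((a1 - b - s / lam * inner p (hscal lam h)) / ((s / lam) ^ 2 / 2)) with (lam * lam * d)
      by (rewrite inner_scal_r, HD2; field; lra).
    simpl; apply (Rmult_le_compat_l (lam * lam)) in Hdle; [| nra].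
    replace (lam * lam * (a + eps / (lam * lam))) with (lam * lam * a + eps) in Hdle by (field; lra).
    lra.
Qed.

(* Comparing f''(u) with f''((1 + s) u) = (1 + s)^2 f''(u) for small s > 0. *)
Lemma prox_sub_f2lower_inner_le u zeta a :
  f2lower f xb p u = Fin a -> prox_sub (f2lower f xb p) u zeta -> inner zeta u <= 2 * a.
Proof.
  intros Ha [gx [Hgx [sigma [delta [Hs [Hd Hp]]]]]]; rewrite Ha in Hgx; injection Hgx as <-.
  pose proof (hnorm_ge0 u).
  apply (le_of_le_plus_small _ _ (a + sigma / 2 * inner u u) (delta / (hnorm u + 1)));
    [apply Rdiv_lt_0_compat; lra |].
  intros s [Hs1 Hs2].
  assert (Hsu : hsub (hscal (1 + s) u) u = hscal s u) by hring.
  assert (Hy : hnorm (hsub (hscal (1 + s) u) u) < delta).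
  { rewrite Hsu, hnorm_scal, Rabs_pos_eq by lra.
    apply (Rmult_lt_compat_r (hnorm u + 1)) in Hs2; [| lra].
    replace (delta / (hnorm u + 1) * (hnorm u + 1)) with delta in Hs2 by (field; lra); nra. }
  pose proof (ERle_trans _ _ _ (Hp _ Hy)
                (f2lower_scale_le u a (1 + s) ltac:(rewrite Ha; simpl; lra) ltac:(lra))) as Hc.
  rewrite Hsu, hnorm_pow2, inner_scal_r, inner_scal_l, inner_scal_r in Hc; simpl in Hc.
  assert (Hk : s * inner zeta u <= s * (2 * a + s * (a + sigma / 2 * inner u u))) by nra.
  apply Rmult_le_reg_l in Hk; lra.
Qed.

Definition Mosco_epi_limit (psi : E -> ER) : Prop :=
  forall tn : nat -> R, (forall n, 0 < tn n) -> Un_cv tn 0 ->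
    Mosco_conv (fun n => epi (Delta2 f xb p (tn n))) (epi psi).

Variable psi : E -> ER.
Hypothesis HM : Mosco_epi_limit psi.

Lemma f2lower_le_of_epi_limit u c : ERle (psi u) (Fin c) -> ERle (f2lower f xb p u) (Fin c).
Proof.
  intro Hpsi; destruct (HM (fun n => / (INR n + 1)) inv_succ_pos Un_cv_inv_succ (u, c)) as [[H1 _] _].
  destruct (H1 Hpsi) as [zs [Hzs [Hf Hs]]].
  apply ERsup_le; intros y [delta [Hd ->]]; apply ERle_Fin_eps; intros eps He.
  destruct (Hf delta Hd) as [N1 HN1]; destruct (inv_succ_eventually_lt delta Hd) as [N2 HN2].
  destruct (Hs eps He) as [N3 HN3].
  set (n := max N1 (max N2 N3)).
  specialize (HN1 n ltac:(unfold n; lia)); specialize (HN2 n ltac:(unfold n; lia)).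
  specialize (HN3 n ltac:(unfold n; lia)); unfold Rdist in HN3; apply Rabs_def2 in HN3; simpl in HN3.
  eapply ERle_trans;
    [apply ERinf_le; exists (/ (INR n + 1)), (fst (zs n)); repeat split; eauto; apply inv_succ_pos |].
  eapply ERle_trans; [apply (Hzs n) | simpl; lra].
Qed.

Lemma epi_limit_le_of_f2lower u c : ERle (f2lower f xb p u) (Fin c) -> ERle (psi u) (Fin c).
Proof.
  intro Hphi.
  destruct (choice (fun n th => 0 < fst th < / (INR n + 1) /\ hnorm (hsub (snd th) u) < / (INR n + 1) /\
                     ERle (Delta2 f xb p (fst th) (snd th)) (Fin (c + / (INR n + 1))))) as [sel Hsel].
  { intro n; pose proof (inv_succ_pos n) as Hn.
    destruct (f2lower_approx u c _ _ Hphi Hn Hn) as [t [h' [d [Ht [Hh [Hd Hdc]]]]]].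
    exists (t, h'); simpl; rewrite Hd; simpl; auto. }
  assert (Htp : forall n, 0 < fst (sel n)) by (intro n; apply (Hsel n)).
  assert (Htc : Un_cv (fun n => fst (sel n)) 0).
  { apply (Un_cv_0_squeeze _ (fun n => / (INR n + 1))); [| apply Un_cv_inv_succ].
    intro n; destruct (Hsel n) as [Ht _]; rewrite Rabs_pos_eq; lra. }
  destruct (HM _ Htp Htc (u, c)) as [_ [_ H2]].
  apply H2; exists (fun k => k), (fun n => (snd (sel n), c + / (INR n + 1))).
  split; [intro; lia |]; split; [intro k; apply (Hsel k) |]; simpl; split.
  - apply norm_conv_weak, (norm_conv_of_dist_lt _ _ (fun n => / (INR n + 1)));
      [intro n; apply (Hsel n) | apply Un_cv_inv_succ].
  - rewrite <- (Rplus_0_r c) at 1; apply CV_plus; [apply Un_cv_const | apply Un_cv_inv_succ].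
Qed.

End SecondOrderEpiDerivative.

(** * Lower semicontinuity of penalised difference quotients *)

Definition ERaff (x : ER) (al c : R) : ER := match x with Fin a => Fin (al * a + c) | _ => x end.

Section LscCalculus.

Context {E : Hilbert}.

Lemma lsc_ext (g1 g2 : E -> ER) : (forall y, g1 y = g2 y) -> lsc g1 -> lsc g2.
Proof.
  intros H Hl x r Hr; rewrite <- H in Hr; destruct (Hl x r Hr) as [d [Hd Hd']].
  exists d; split; auto; intros; rewrite <- H; auto.
Qed.

Lemma lsc_comp_dilation (g : E -> ER) (xb : E) t :
  lsc g -> t > 0 -> lsc (fun y => g (hadd xb (hscal t y))).
Proof.
  intros Hg Ht x r Hr; destruct (Hg _ _ Hr) as [d [Hd Hd']].
  exists (d / t); split; [apply Rdiv_lt_0_compat; lra |]; intros y Hy; apply Hd'.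
  replace (hsub (hadd xb (hscal t y)) (hadd xb (hscal t x))) with (hscal t (hsub y x)) by hring.
  rewrite hnorm_scal, Rabs_pos_eq by lra.
  apply (Rmult_lt_compat_l t) in Hy; [| lra].
  replace (t * (d / t)) with d in Hy by (field; lra); lra.
Qed.

Lemma lsc_affine_plus (g : E -> ER) al (beta : E -> R) :
  lsc g -> al > 0 -> hcontinuous beta -> lsc (fun y => ERaff (g y) al (beta y)).
Proof.
  intros Hg Hal Hb x r Hr; set (c0 := (r - beta x) / al).
  assert (Hc0 : al * c0 = r - beta x) by (unfold c0; field; lra).
  assert (Hm : exists c1, c0 < c1 /\ ERlt (Fin c1) (g x)).
  { destruct (g x) as [a| |]; simpl in Hr; destruct Hr as [Hr0 Hne]; simpl in Hr0; [| | contradiction].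
    - assert (Hlt : r < al * a + beta x)
        by (destruct (Rle_lt_or_eq_dec _ _ Hr0) as [| He]; auto; exfalso; apply Hne; now rewrite He).
      assert (c0 < a) by (apply (Rmult_lt_reg_l al); lra).
      exists ((c0 + a) / 2); split; [lra |]; split; simpl; [lra | intro Heq; injection Heq; lra].
    - exists (c0 + 1); split; [lra |]; split; simpl; [auto | discriminate]. }
  destruct Hm as [c1 [Hc1 Hlt]].
  destruct (Hg _ _ Hlt) as [d1 [Hd1 Hd1']].
  destruct (Hb x (al * (c1 - c0))) as [d2 [Hd2 Hd2']]; [nra |].
  exists (Rmin d1 d2); split; [apply Rmin_pos; lra |]; intros y Hy.
  pose proof (Rmin_l d1 d2); pose proof (Rmin_r d1 d2).
  specialize (Hd1' y ltac:(lra)); specialize (Hd2' y ltac:(lra)); apply Rabs_def2 in Hd2'.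
  destruct Hd1' as [Hd1' Hne]; destruct (g y) as [a'| |]; simpl in *; [| | contradiction].
  - assert (Ha' : c1 < a') by (destruct (Rle_lt_or_eq_dec _ _ Hd1') as [| He]; auto; subst; tauto).
    assert (al * c1 < al * a') by (apply Rmult_lt_compat_l; lra).
    split; simpl; [lra | intro Heq; injection Heq; lra].
  - split; simpl; [auto | discriminate].
Qed.

Lemma lsc_restrict_ball (H : E -> ER) u rho :
  lsc H -> lsc (fun y => if Rle_dec (hnorm (hsub y u)) rho then H y else PInf).
Proof.
  intros HH x r Hr; destruct (Rle_dec (hnorm (hsub x u)) rho) as [Hin | Hout].
  - destruct (HH x r Hr) as [d [Hd Hd']]; exists d; split; auto; intros y Hy.
    destruct (Rle_dec (hnorm (hsub y u)) rho); auto; split; simpl; [auto | discriminate].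
  - exists (hnorm (hsub x u) - rho); split; [lra |]; intros y Hy.
    destruct (Rle_dec (hnorm (hsub y u)) rho) as [Hyin |]; [| split; simpl; [auto | discriminate]].
    exfalso; pose proof (hnorm_sub_triangle x y u); rewrite hnorm_sub_sym in Hy; lra.
Qed.

End LscCalculus.

Section PenalisedQuotient.

Context {E : Hilbert}.
Variables (f : E -> ER) (xb p : E) (b : R).
Hypothesis f_nomin : forall x, f x <> MInf.
Hypothesis f_lsc : lsc f.
Hypothesis f_xb : f xb = Fin b.

Definition penalised_quotient t u rho (q : E -> R) (y : E) : ER :=
  if Rle_dec (hnorm (hsub y u)) rho then ERplus (Delta2 f xb p t y) (q y) else PInf.

Lemma penalised_quotient_nomin t u rho q y : penalised_quotient t u rho q y <> MInf.
Proof.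
  unfold penalised_quotient; destruct (Rle_dec _ _); [| discriminate].
  pose proof (Delta2_nomin f xb p t y); destruct (Delta2 f xb p t y); simpl; congruence.
Qed.

Lemma penalised_quotient_lsc t u rho q :
  t > 0 -> hcontinuous q -> lsc (penalised_quotient t u rho q).
Proof.
  intros Ht Hq; apply lsc_restrict_ball.
  assert (Ht2 : t ^ 2 / 2 > 0) by (simpl; nra).
  apply (lsc_ext (fun y => ERaff (f (hadd xb (hscal t y))) (/ (t ^ 2 / 2))
                              ((- b - t * inner p y) / (t ^ 2 / 2) + q y))).
  - intro y; unfold Delta2; rewrite f_xb; specialize (f_nomin (hadd xb (hscal t y))).
    destruct (f (hadd xb (hscal t y))); simpl; [f_equal; field; lra | reflexivity | tauto].
  - apply lsc_affine_plus; [now apply lsc_comp_dilation | now apply Rinv_0_lt_compat |].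
    apply hcontinuous_plus; auto.
    apply (hcontinuous_ext (fun y => / (t ^ 2 / 2) * (- b) + (- t / (t ^ 2 / 2)) * inner p y));
      [intro y; field; lra |].
    apply hcontinuous_plus, hcontinuous_scal, hcontinuous_inner; apply hcontinuous_const.
Qed.

End PenalisedQuotient.

(** * Proximal subgradients of the epi-derivative give mixed tangent directions *)

Lemma weak_conv_sqdist_le {E : Hilbert} (yk : nat -> E) yb u Lq :
  weak_conv yk yb -> Un_cv (fun k => inner (hsub (yk k) u) (hsub (yk k) u)) Lq ->
  inner (hsub yb u) (hsub yb u) <= Lq.
Proof.
  intros Hw HL; set (nq := inner (hsub yb u) (hsub yb u)).
  assert (Hc : Un_cv (fun k => 2 * inner (hsub (yk k) u) (hsub yb u)) (2 * nq)).
  { apply CV_mult; [apply Un_cv_const |]; unfold nq.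
    apply (Un_cv_ext (fun k => inner (yk k) (hsub yb u) - inner u (hsub yb u))); [intro; now rewrite inner_sub_l |].
    rewrite inner_sub_l; apply CV_minus; [apply Hw | apply Un_cv_const]. }
  pose proof (Rle_cv_lim (fun k => two_inner_le (hsub (yk k) u) (hsub yb u)) Hc
                (CV_plus _ _ _ _ HL (Un_cv_const nq))); lra.
Qed.

Lemma weak_subseq_sqdist {E : Hilbert} (yk : nat -> E) u r :
  (forall k, hnorm (hsub (yk k) u) <= r) ->
  exists th yb Lq, sincr th /\ weak_conv (fun j => yk (th j)) yb /\
    Un_cv (fun j => inner (hsub (yk (th j)) u) (hsub (yk (th j)) u)) Lq /\
    inner (hsub yb u) (hsub yb u) <= Lq /\ Lq <= r * r.
Proof.
  intro Hr; assert (Hsq : forall k, inner (hsub (yk k) u) (hsub (yk k) u) <= r * r).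
  { intro k; rewrite <- hnorm_sq; pose proof (hnorm_ge0 (hsub (yk k) u)); pose proof (Hr k); nra. }
  assert (Hbd : forall k, hnorm (yk k) <= hnorm u + r).
  { intro k; pose proof (hnorm_sub_triangle (yk k) u hzero) as Ht.
    rewrite !hsub_zero_r in Ht; pose proof (Hr k); lra. }
  destruct (weak_compact yk _ Hbd) as [phi1 [yb [Hphi1 Hw1]]].
  destruct (bounded_seq_cv_subseq (fun j => inner (hsub (yk (phi1 j)) u) (hsub (yk (phi1 j)) u)) (r * r))
    as [phi2 [Lq [Hphi2 HLq]]].
  { intro j; rewrite Rabs_pos_eq by apply inner_pos; apply Hsq. }
  assert (Hw : weak_conv (fun j => yk (phi1 (phi2 j))) yb)
    by (apply (weak_conv_subseq (fun j => yk (phi1 j))); auto).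
  exists (fun j => phi1 (phi2 j)), yb, Lq; split; [now apply sincr_comp |]; split; [exact Hw |].
  split; [exact HLq | split; [apply (weak_conv_sqdist_le _ _ _ _ Hw HLq) |]].
  apply (Un_cv_le_eventually _ _ _ HLq); exists O; intros j _; apply Hsq.
Qed.

Section MixedTangents.

Context {E : Hilbert}.
Variables (f : E -> ER) (xb p : E) (b : R) (psi : E -> ER).
Hypothesis f_nomin : forall x, f x <> MInf.
Hypothesis f_lsc : lsc f.
Hypothesis f_xb : f xb = Fin b.
Hypothesis HM : Mosco_epi_limit f xb p psi.

Lemma f2lower_weak_liminf (nk : nat -> nat) (yk : nat -> E) (rk : nat -> R) yb r :
  sincr nk -> weak_conv yk yb -> Un_cv rk r ->
  (forall k, ERle (Delta2 f xb p (/ (INR (nk k) + 1)) (yk k)) (Fin (rk k))) ->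
  ERle (f2lower f xb p yb) (Fin r).
Proof.
  intros Hnk Hw Hr Hk; apply (f2lower_le_of_epi_limit f xb p psi HM).
  destruct (HM (fun n => / (INR n + 1)) inv_succ_pos Un_cv_inv_succ (yb, r)) as [_ [_ H2]].
  apply H2; exists nk, (fun k => (yk k, rk k)); auto.
Qed.

(* By contradiction: weak compactness and the Mosco liminf inequality turn a violating sequence
   into a violation of the proximal inequality for f''. *)
Lemma Delta2_uniform_minorant u zeta a sigma delta :
  sigma > 0 -> delta > 0 ->
  (forall y, hnorm (hsub y u) < delta ->
     ERle (Fin (a + inner zeta (hsub y u) - sigma / 2 * (hnorm (hsub y u)) ^ 2)) (f2lower f xb p y)) ->
  forall eta, eta > 0 -> exists N, forall n, (N <= n)%nat -> forall y, hnorm (hsub y u) <= delta / 2 ->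
    ERle (Fin (a - inner zeta u - eta + sigma / 4 * inner (hsub y u) (hsub y u)))
         (ERplus (Delta2 f xb p (/ (INR n + 1)) y) (- inner zeta y + sigma * inner (hsub y u) (hsub y u))).
Proof.
  intros Hs Hd Hprox eta He; apply NNPP; intro Hn.
  set (m := a - inner zeta u - eta).
  set (nq := fun y => inner (hsub y u) (hsub y u)).
  destruct (sincr_choice (fun _ n y => hnorm (hsub y u) <= delta / 2 /\
      exists d, Delta2 f xb p (/ (INR n + 1)) y = Fin d /\
                d + (- inner zeta y + sigma * nq y) < m + sigma / 4 * nq y)) as [nk [yk [Hnk Hk]]].
  { intros _ N; apply NNPP; intro Hno; apply Hn; exists N; intros n HNn y Hy.
    apply NNPP; intro Hv; apply Hno; exists n, y; split; [| split]; auto.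
    pose proof (Delta2_nomin f xb p (/ (INR n + 1)) y).
    destruct (Delta2 f xb p (/ (INR n + 1)) y) as [d| |]; simpl in Hv; [| tauto | congruence].
    exists d; split; auto; unfold nq, m; lra. }
  destruct (weak_subseq_sqdist yk u (delta / 2)) as [th [yb [Lq [Hth [Hw [HLq [Hnq HLqr]]]]]]].
  { intro k; apply Hk. }
  assert (Hphi : ERle (f2lower f xb p yb) (Fin (m + inner zeta yb - 3 * sigma / 4 * Lq))).
  { apply (f2lower_weak_liminf (fun j => nk (th j)) (fun j => yk (th j))
             (fun j => m + inner zeta (yk (th j)) - 3 * sigma / 4 * nq (yk (th j)))).
    - now apply sincr_comp.
    - exact Hw.
    - apply CV_minus; [apply CV_plus; [apply Un_cv_const |] | apply CV_mult; [apply Un_cv_const | exact HLq]].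
      rewrite inner_sym; eapply Un_cv_ext; [intro; apply inner_sym | apply Hw].
    - intro j; destruct (Hk (th j)) as [_ [d [Hd1 Hd2]]]; rewrite Hd1; simpl; lra. }
  assert (Hyb : hnorm (hsub yb u) < delta) by (apply hnorm_lt_sq; [lra | nra]).
  pose proof (ERle_trans _ _ _ (Hprox yb Hyb) Hphi) as Hfin.
  rewrite inner_sub_r, hnorm_pow2 in Hfin; fold (nq yb) in Hfin, Hnq; unfold m in Hfin; simpl in Hfin.
  pose proof (Rmult_le_compat_l _ _ _ (Rlt_le _ _ Hs) Hnq).
  pose proof (Rmult_le_pos _ _ (Rlt_le _ _ Hs) (inner_pos (hsub yb u))) as Hpos; fold (nq yb) in Hpos.
  lra.
Qed.

(* A proximal inequality for the quotient y |-> Delta2 f(xb, p, t, y) at v rescales to one for f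
   at xb + t v, because f(xb + t y) = f(xb) + t <p, y> + t^2/2 Delta2 f(xb, p, t, y). *)
Lemma prox_sub_of_Delta2_prox t v dv xi S r :
  t > 0 -> S > 0 -> r > 0 -> Delta2 f xb p t v = Fin dv ->
  (forall y, hnorm (hsub y v) < r ->
     ERle (Fin (dv + inner xi (hsub y v) - S / 2 * inner (hsub y v) (hsub y v))) (Delta2 f xb p t y)) ->
  prox_sub f (hadd xb (hscal t v)) (hadd p (hscal (t / 2) xi)).
Proof.
  intros Ht HS Hr Hdv Hy.
  destruct (Delta2_cases f xb p t v) as [Hp | [fx [b' [Hfx [Hb' Hdv']]]]]; [congruence |].
  rewrite f_xb in Hb'; injection Hb' as <-; rewrite Hdv in Hdv'; injection Hdv' as Hdv'.
  exists fx; split; [exact Hfx |]; exists (S / 2), (t * r); split; [lra | split; [nra |]].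
  intros x' Hx'; set (d := hsub x' (hadd xb (hscal t v))).
  set (y := hadd v (hscal (/ t) d)).
  assert (Hx'y : x' = hadd xb (hscal t y)).
  { apply inner_ext; intro w; unfold y, d; repeat rewrite ?inner_add_l, ?inner_scal_l, ?inner_sub_l.
    field; lra. }
  assert (Hyv : hsub y v = hscal (/ t) d) by (unfold y; hring).
  assert (Hyr : hnorm (hsub y v) < r).
  { rewrite Hyv, hnorm_scal, Rabs_pos_eq by (apply Rlt_le, Rinv_0_lt_compat; lra).
    apply (Rmult_lt_reg_l t); [lra |]; rewrite <- Rmult_assoc, Rinv_r, Rmult_1_l by lra; exact Hx'. }
  specialize (Hy y Hyr); unfold Delta2 in Hy; rewrite <- Hx'y, f_xb in Hy.
  destruct (f x') as [fx'| |] eqn:Hfx'; [| exact I | exfalso; exact (f_nomin x' Hfx')].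
  simpl in Hy |- *.
  rewrite Hyv, inner_scal_l, !inner_scal_r in Hy.
  replace (inner p y) with (inner p v + / t * inner p d) in Hy
    by (unfold y; rewrite inner_add_r, inner_scal_r; ring).
  rewrite Rmult_1_r, hnorm_sq, inner_add_l, inner_scal_l; rewrite Hdv' in Hy.
  assert (Ht2 : t * (t * 1) / 2 > 0) by nra.
  apply (Rmult_le_compat_r (t * (t * 1) / 2)) in Hy; [| lra].
  replace ((fx' - b - t * (inner p v + / t * inner p d)) / (t * (t * 1) / 2) * (t * (t * 1) / 2))
    with (fx' - b - t * inner p v - inner p d) in Hy by (field; lra).
  replace (((fx - b - t * inner p v) / (t * (t * 1) / 2) + / t * inner xi d - S / 2 * (/ t * (/ t * inner d d)))
           * (t * (t * 1) / 2))
    with (fx - b - t * inner p v + t / 2 * inner xi d - S / 4 * inner d d) in Hy by (field; lra).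
  lra.
Qed.

(* The quadratic penalty q moves the subgradient by -grad q(v) = zeta - 2 sigma (v - u). *)
Lemma Delta2_prox_of_penalised t u rho zeta sigma v dv xi S :
  hnorm (hsub v u) <= rho / 2 -> Delta2 f xb p t v = Fin dv ->
  (forall y, ERle (Fin (dv + (- inner zeta v + sigma * inner (hsub v u) (hsub v u))
                        + inner xi (hsub y v) - S / 2 * (hnorm (hsub y v)) ^ 2))
                  (penalised_quotient f xb p t u rho
                     (fun y => - inner zeta y + sigma * inner (hsub y u) (hsub y u)) y)) ->
  forall y, hnorm (hsub y v) < rho / 2 ->
    ERle (Fin (dv + inner (hadd (hadd xi zeta) (hscal (-2 * sigma) (hsub v u))) (hsub y v)
               - (S + 2 * sigma) / 2 * inner (hsub y v) (hsub y v)))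
         (Delta2 f xb p t y).
Proof.
  intros Hv Hdv HG y Hy; specialize (HG y); unfold penalised_quotient in HG.
  destruct (Rle_dec (hnorm (hsub y u)) rho) as [_ | Hout].
  2: { exfalso; pose proof (hnorm_sub_triangle y v u); lra. }
  rewrite hnorm_pow2 in HG; pose proof (Delta2_nomin f xb p t y).
  destruct (Delta2 f xb p t y) as [dy| |]; simpl in HG |- *; [| exact I | congruence].
  replace (hsub y u) with (hadd (hsub y v) (hsub v u)) in HG by hring.
  rewrite !inner_add_l, !inner_add_r, (inner_sym (hsub y v) (hsub v u)) in HG.
  rewrite !inner_add_l, inner_scal_l.
  replace (inner zeta y) with (inner zeta v + inner zeta (hsub y v)) in HG by (rewrite inner_sub_r; ring).
  lra.
Qed.

Lemma Delta2_recovery_point u a (q : E -> R) rho eta N :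
  f2lower f xb p u = Fin a -> hcontinuous q -> rho > 0 -> eta > 0 ->
  exists n uh dh, (N <= n)%nat /\ hnorm (hsub uh u) <= rho /\
    Delta2 f xb p (/ (INR n + 1)) uh = Fin dh /\ dh + q uh < a + q u + eta.
Proof.
  intros Ha Hqc Hrho Heta.
  assert (Hpsi : ERle (psi u) (Fin a))
    by (apply (epi_limit_le_of_f2lower f xb p psi HM); rewrite Ha; simpl; lra).
  destruct (HM (fun n => / (INR n + 1)) inv_succ_pos Un_cv_inv_succ (u, a)) as [[Hrec _] _].
  destruct (Hrec Hpsi) as [zs [Hzs [Hzf Hzsn]]]; simpl in Hzf, Hzsn.
  assert (Hqcv : Un_cv (fun n => snd (zs n) + q (fst (zs n))) (a + q u)).
  { apply CV_plus; auto; intros e He; destruct (Hqc u e He) as [d [Hd0 Hd']].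
    destruct (Hzf d Hd0) as [N' HN]; exists N'; intros n Hn; apply Hd', HN, Hn. }
  destruct (Hzf rho Hrho) as [N2 HN2].
  destruct (Un_cv_eventually_between _ _ (a + q u - 1) (a + q u + eta) Hqcv ltac:(lra)) as [N3 HN3].
  set (n := max N (max N2 N3)).
  specialize (HN2 n ltac:(unfold n; lia)); specialize (HN3 n ltac:(unfold n; lia)).
  pose proof (Hzs n) as Hep; unfold epi in Hep.
  destruct (Delta2 f xb p (/ (INR n + 1)) (fst (zs n))) as [dh| |] eqn:Hdh; simpl in Hep;
    [| contradiction | exfalso; exact (Delta2_nomin f xb p _ _ Hdh)].
  exists n, (fst (zs n)), dh; split; [unfold n; lia |]; split; [lra |]; split; [auto | lra].
Qed.

Lemma penalised_quotient_prox_point t u rho (q : E -> R) lb uh dh kappa :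
  t > 0 -> hcontinuous q -> hnorm (hsub uh u) <= rho -> Delta2 f xb p t uh = Fin dh ->
  (forall y, hnorm (hsub y u) <= rho -> ERle (Fin lb) (ERplus (Delta2 f xb p t y) (q y))) -> kappa > 0 ->
  exists v dv xi S, hnorm (hsub v u) <= rho /\ Delta2 f xb p t v = Fin dv /\ dv + q v <= dh + q uh /\
    hnorm xi <= kappa /\ S > 0 /\
    forall y, ERle (Fin (dv + q v + inner xi (hsub y v) - S / 2 * (hnorm (hsub y v)) ^ 2))
                   (penalised_quotient f xb p t u rho q y).
Proof.
  intros Ht Hqc Huh Hdh Hlow Hk; set (G := penalised_quotient f xb p t u rho q).
  assert (HGuh : G uh = Fin (dh + q uh)).
  { unfold G, penalised_quotient; destruct (Rle_dec (hnorm (hsub uh u)) rho); [| lra].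
    now rewrite Hdh. }
  destruct (smooth_variational_principle G lb (dh + q uh) kappa uh
              (penalised_quotient_nomin f xb p t u rho q)
              (penalised_quotient_lsc f xb p b f_nomin f_lsc f_xb t u rho q Ht Hqc))
    as [v [gv [xi [S [HGv [Hgv [Hxi [HS HVP]]]]]]]]; auto.
  { intro y; unfold G, penalised_quotient; destruct (Rle_dec _ _); [apply Hlow; auto | exact I]. }
  unfold G, penalised_quotient in HGv; destruct (Rle_dec (hnorm (hsub v u)) rho) as [Hvin |];
    [| discriminate].
  destruct (Delta2 f xb p t v) as [dv| |] eqn:Hdv; simpl in HGv; try discriminate.
  injection HGv as HGv; exists v, dv, xi, S; rewrite HGv; repeat split; auto.
Qed.

Lemma half_shift_dist (x y z : E) sigma : sigma > 0 ->
  hnorm (hsub (hscal (/ 2) (hadd (hadd x y) (hscal (-2 * sigma) z))) (hscal (/ 2) y))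
    <= (hnorm x + 2 * sigma * hnorm z) / 2.
Proof.
  intro Hs; replace (hsub _ _) with (hscal (/ 2) (hadd x (hscal (-2 * sigma) z))) by hring.
  rewrite hnorm_scal, Rabs_pos_eq by lra.
  pose proof (hnorm_add_le x (hscal (-2 * sigma) z)) as Hn.
  rewrite hnorm_scal, Rabs_left in Hn by lra; lra.
Qed.

Lemma prox_graph_near_direction u zeta :
  prox_sub (f2lower f xb p) u zeta ->
  forall eps N0, eps > 0 -> exists n v z, (N0 <= n)%nat /\ hnorm (hsub v u) < eps /\
     hnorm (hsub z (hscal (/ 2) zeta)) < eps /\
     prox_sub f (hadd xb (hscal (/ (INR n + 1)) v)) (hadd p (hscal (/ (INR n + 1)) z)).
Proof.
  intros [a [Ha [sigma [delta [Hs [Hd Hprox]]]]]] eps N0 Heps.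
  set (rho := delta / 2).
  set (q := fun y => - inner zeta y + sigma * inner (hsub y u) (hsub y u)).
  assert (Hqc : hcontinuous q) by apply hcontinuous_penalty.
  set (theta := Rmin eps (Rmin (rho / 2) (eps / (8 * sigma)))).
  assert (Hth1 : theta <= eps) by apply Rmin_l.
  assert (Hth2 : theta <= rho / 2) by (eapply Rle_trans; [apply Rmin_r | apply Rmin_l]).
  assert (Hth3 : 2 * sigma * theta <= eps / 4).
  { assert (Ht : theta <= eps / (8 * sigma)) by (eapply Rle_trans; [apply Rmin_r | apply Rmin_r]).
    apply (Rmult_le_compat_l (2 * sigma)) in Ht; [| lra].
    replace (2 * sigma * (eps / (8 * sigma))) with (eps / 4) in Ht by (field; lra); lra. }
  assert (Hth : theta > 0)
    by (unfold theta, rho; repeat apply Rmin_pos; try apply Rdiv_lt_0_compat; lra).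
  set (eta := sigma * theta * theta / 16).
  assert (Heta : eta > 0) by (unfold eta; apply Rdiv_lt_0_compat; [apply Rmult_lt_0_compat; nra | lra]).
  destruct (Delta2_uniform_minorant u zeta a sigma delta Hs Hd Hprox eta Heta) as [N1 HU].
  destruct (Delta2_recovery_point u a q rho eta (max N0 N1) Ha Hqc ltac:(unfold rho; lra) Heta)
    as [n [uh [dh [Hn [Huh [Hdh Hval]]]]]].
  specialize (HU n ltac:(lia)); set (t := / (INR n + 1)) in *.
  destruct (penalised_quotient_prox_point t u rho q (a - inner zeta u - eta) uh dh (eps / 2)
              (inv_succ_pos n) Hqc Huh Hdh) as [v [dv [xi [S [Hvin [Hdv [Hvval [Hxi [HS HVP]]]]]]]]].
  { intros y Hy; eapply ERle_trans; [| apply (HU y Hy)]; simpl.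
    pose proof (inner_pos (hsub y u)); nra. }
  { lra. }
  assert (Hvu : hnorm (hsub v u) < theta).
  { specialize (HU v Hvin); rewrite Hdv in HU; simpl in HU.
    assert (Hqu : q u = - inner zeta u) by (unfold q; rewrite <- hnorm_sq, hnorm_sub_diag; ring).
    apply hnorm_lt_sq; [lra |]; apply (Rmult_lt_reg_l (sigma / 4)); [lra |].
    unfold q, eta in *; lra. }
  exists n, v, (hscal (/ 2) (hadd (hadd xi zeta) (hscal (-2 * sigma) (hsub v u)))).
  split; [lia |]; split; [lra |]; split.
  - pose proof (half_shift_dist xi zeta (hsub v u) sigma Hs); nra.
  - replace (hscal t (hscal (/ 2) _)) with
      (hscal (t / 2) (hadd (hadd xi zeta) (hscal (-2 * sigma) (hsub v u)))) by hring.
    apply (prox_sub_of_Delta2_prox t v dv _ (S + 2 * sigma) (rho / 2)); auto;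
      [apply inv_succ_pos | lra | lra |].
    apply (Delta2_prox_of_penalised t u rho zeta sigma v dv xi S); auto; lra.
Qed.

Lemma T_M_of_prox_sub_f2lower u zeta :
  prox_sub (f2lower f xb p) u zeta -> T_M f xb p u (hscal (/ 2) zeta).
Proof.
  intro Hpr.
  destruct (choice (fun j (nvz : nat * E * E) => let '(n, v, z) := nvz in
     (j <= n)%nat /\ hnorm (hsub v u) < / (INR j + 1) /\ hnorm (hsub z (hscal (/ 2) zeta)) < / (INR j + 1) /\
     prox_sub f (hadd xb (hscal (/ (INR n + 1)) v)) (hadd p (hscal (/ (INR n + 1)) z)))) as [sel Hsel].
  { intro j; destruct (prox_graph_near_direction u zeta Hpr _ j (inv_succ_pos j)) as [n [v [z H]]].
    exists (n, v, z); exact H. }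
  exists (fun j => / (INR (fst (fst (sel j))) + 1)), (fun j => snd (fst (sel j))), (fun j => snd (sel j)).
  split; [intro; apply inv_succ_pos |]; split; [| split; [| split]].
  - apply (Un_cv_0_squeeze _ (fun j => / (INR j + 1))); [| apply Un_cv_inv_succ].
    intro j; specialize (Hsel j); destruct (sel j) as [[n v] z]; destruct Hsel as [Hjn _]; simpl.
    rewrite Rabs_pos_eq by (apply Rlt_le, inv_succ_pos).
    apply Rinv_le_contravar; [pose proof (pos_INR j); lra |]; apply le_INR in Hjn; lra.
  - apply (norm_conv_of_dist_lt _ _ (fun j => / (INR j + 1))); [| apply Un_cv_inv_succ].
    intro j; specialize (Hsel j); destruct (sel j) as [[n v] z]; apply Hsel.
  - apply norm_conv_weak, (norm_conv_of_dist_lt _ _ (fun j => / (INR j + 1))); [| apply Un_cv_inv_succ].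
    intro j; specialize (Hsel j); destruct (sel j) as [[n v] z]; apply Hsel.
  - intro j; specialize (Hsel j); destruct (sel j) as [[n v] z]; apply Hsel.
Qed.

Lemma d2_M_inner_le u zeta a h w :
  f2lower f xb p u = Fin a -> prox_sub (f2lower f xb p) u zeta -> d2_M f xb p h w ->
  inner w u <= a + / 2 * inner zeta (hsub h u).
Proof.
  intros Ha Hpr Hw.
  pose proof (Hw _ _ (T_M_of_prox_sub_f2lower u zeta Hpr)) as Hn.
  rewrite inner_scal_l, inner_scal_r, (inner_sym h zeta) in Hn.
  pose proof (prox_sub_f2lower_inner_le f xb p u zeta a Ha Hpr).
  rewrite inner_sub_r; lra.
Qed.

End MixedTangents.

Theorem proposition4p2 (E : Hilbert) (f : E -> ER) (xb p : E)
  (hf_nomin : forall x, f x <> MInf)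
  (hf_lsc : lsc f)
  (hxb : exists r, f xb = Fin r)
  (hp : prox_sub f xb p)
  (hepi : twice_epi_diff_Mosco f xb p) :
  forall h : E, dom_lim_sub (f2lower f xb p) h ->
  forall w : E, d2_M f xb p h w ->
    ERle (Fin (inner w h)) (f2lower f xb p h).
Proof.
  intros h [zeta [a [Ha [xn [zn [an [Hxn [Han [Hcv [Hwz Hpn]]]]]]]]]] w Hw.
  destruct hepi as [psi [_ HM]]; destruct hxb as [b Hb].
  destruct (weak_conv_bounded zn zeta Hwz) as [B HB].
  assert (Hk : forall k, inner w (xn k) <= an k + / 2 * (B * hnorm (hsub (xn k) h))).
  { intro k; pose proof (d2_M_inner_le f xb p b psi hf_nomin hf_lsc Hb HM _ _ _ h w (Han k) (Hpn k) Hw).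
    pose proof (inner_le_hnorm (zn k) (hsub h (xn k))) as Hcs; rewrite hnorm_sub_sym in Hcs.
    pose proof (Rmult_le_compat_r _ _ _ (hnorm_ge0 (hsub (xn k) h)) (HB k)); lra. }
  rewrite Ha; apply (Rle_cv_lim Hk); [now apply norm_conv_inner_l |].
  rewrite <- (Rplus_0_r a), <- (Rmult_0_r (/ 2)), <- (Rmult_0_r B).
  apply CV_plus, CV_mult, CV_mult; auto; try apply Un_cv_const.
  rewrite <- (hnorm_sub_diag h); now apply norm_conv_hnorm.
Qed.
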